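(* There exists a topological dynamical system $(X,T)$ which is a nonminimal E-system, is sensitive but not thickly sensitive, and satisfies $\mathrm{Tran}(X,T)\subsetneq \mathrm{Eq}_{\mathrm{syn}}(X,T)=X$.
   Context: $(X,\varrho)$ compact metric, $T$ continuous surjection. $S_T(U,\delta)=\{n\in\mathbb{N}:\exists x_1,x_2\in U,\ \varrho(T^nx_1,T^nx_2)>\delta\}$, $J_T(U,\delta)=\mathbb N\setminus S_T(U,\delta)$. Sensitive: there is $\delta>0$ with $S_T(U,\delta)$ infinite (equivalently nonempty for all opene $U$); thickly sensitive: there is $\delta>0$ with $S_T(U,\delta)$ thick (containing arbitrarily long blocks of consecutive integers) for all opene $U$. $\mathrm{Eq}_{\mathrm{syn}}(X,T)$: points $x$ such that for every $\varepsilon>0$ some neighborhood $U$ of $x$ has $J_T(U,\varepsilon)$ syndetic (bounded gaps). $\mathrm{Tran}(X,T)$: points with dense orbit. An E-system is a transitive system admitting a $T$-invariant Borel probability measure with full support. *)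

From Stdlib Require Import Reals List.
Open Scope R_scope.

Section Dyn.
Variable X : Type.
Variable d : X -> X -> R.
Variable T : X -> X.

Definition is_metric : Prop :=
  (forall x y, 0 <= d x y) /\ (forall x y, d x y = 0 <-> x = y) /\
  (forall x y, d x y = d y x) /\ (forall x y z, d x z <= d x y + d y z).

Definition is_open (U : X -> Prop) : Prop :=
  forall x, U x -> exists r, 0 < r /\ forall y, d x y < r -> U y.

Definition is_closed (F : X -> Prop) : Prop := is_open (fun x => ~ F x).

Definition opene (U : X -> Prop) : Prop := is_open U /\ exists x, U x.

Definition is_compact : Prop :=
  forall (I : Type) (U : I -> X -> Prop), (forall i, is_open (U i)) ->
    (forall x, exists i, U i x) ->
    exists l : list I, forall x, exists i, In i l /\ U i x.

Definition continuous_map : Prop :=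
  forall x eps, 0 < eps -> exists del, 0 < del /\
    forall y, d x y < del -> d (T x) (T y) < eps.

Definition surjective_map : Prop := forall y, exists x, T x = y.

Definition TDS : Prop :=
  is_metric /\ is_compact /\ continuous_map /\ surjective_map.

Definition iterT (n : nat) (x : X) : X := Nat.iter n T x.

Definition S_T (U : X -> Prop) (del : R) (n : nat) : Prop :=
  exists x1 x2, U x1 /\ U x2 /\ d (iterT n x1) (iterT n x2) > del.

Definition J_T (U : X -> Prop) (del : R) (n : nat) : Prop := ~ S_T U del n.

Definition infinite_nat (A : nat -> Prop) : Prop :=
  forall N, exists n, (N <= n)%nat /\ A n.

Definition thick (A : nat -> Prop) : Prop :=
  forall L : nat, exists a : nat, forall i, (i < L)%nat -> A (a + i)%nat.

Definition syndetic (A : nat -> Prop) : Prop :=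
  exists L : nat, forall a : nat, exists i, (i < L)%nat /\ A (a + i)%nat.

Definition sensitive : Prop :=
  exists del, 0 < del /\ forall U, opene U -> infinite_nat (S_T U del).

Definition thickly_sensitive : Prop :=
  exists del, 0 < del /\ forall U, opene U -> thick (S_T U del).

Definition Eq_syn (x : X) : Prop :=
  forall eps, 0 < eps -> exists U, is_open U /\ U x /\ syndetic (J_T U eps).

Definition Tran (x : X) : Prop :=
  forall y eps, 0 < eps -> exists n, d (iterT n x) y < eps.

Definition transitive_sys : Prop :=
  forall U V, opene U -> opene V -> exists n x, U x /\ V (iterT n x).

Definition minimal_sys : Prop :=
  forall Y : X -> Prop, is_closed Y -> (forall y, Y y -> Y (T y)) ->
    (exists y, Y y) -> forall x, Y x.

Inductive borel : (X -> Prop) -> Prop :=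
| borel_open : forall U, is_open U -> borel U
| borel_compl : forall A, borel A -> borel (fun x => ~ A x)
| borel_union : forall A : nat -> X -> Prop, (forall n, borel (A n)) ->
    borel (fun x => exists n, A n x).

(* mu is a Borel probability measure (values off Borel sets are irrelevant) *)
Definition borel_prob_measure (mu : (X -> Prop) -> R) : Prop :=
  (forall A, borel A -> 0 <= mu A) /\
  mu (fun _ => True) = 1 /\
  (forall A : nat -> X -> Prop, (forall n, borel (A n)) ->
     (forall m n x, m <> n -> A m x -> A n x -> False) ->
     infinite_sum (fun n => mu (A n)) (mu (fun x => exists n, A n x))).

Definition T_invariant (mu : (X -> Prop) -> R) : Prop :=
  forall A, borel A -> mu (fun x => A (T x)) = mu A.

Definition full_support (mu : (X -> Prop) -> R) : Prop :=
  forall U, opene U -> 0 < mu U.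

Definition E_system : Prop :=
  transitive_sys /\
  exists mu, borel_prob_measure mu /\ T_invariant mu /\ full_support mu.

End Dyn.

From Stdlib Require Import Reals List.
From Stdlib Require Import Lra Arith Lia Bool FunctionalExtensionality PropExtensionality.
From Stdlib Require Import Classical ClassicalEpsilon ProofIrrelevance.
From HB Require Import structures.
From mathcomp Require all_boot all_order all_algebra all_classical all_reals all_analysis Rstruct.

(* The system is the orbit closure [X] of the graph of the coding [z |-> (1_C (z + n))_n]
   over the 2-adic odometer [z |-> z + 1], with [T] the odometer times the shift; here
   [C] is the complement of an open set [O] of Haar measure at most [1/2] which contains
   a ball [j + 2^(j+2) Z_2] around every natural number [j].

   Each residue class mod [2^(m+2)] is visited with bounded gaps, and at such a time [n]
   every [z] in the class has [z + n + j] in the ball around [j] for [j < m]: all points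
   of [X] are syndetically equicontinuous, so [X] is not thickly sensitive. The points of
   [X] with second coordinate [0] form a proper closed invariant set containing the graph
   point over [0], whose orbit is therefore not dense.

   On the binary expansion of [[0,1)] the odometer is a piecewise translation, so Lebesgue
   measure transports to an invariant Haar measure on [Z_2], and its image under the graph
   map is an invariant Borel probability measure on [X]. Near any graph point, an open set
   contains all graph points over a cylinder except those [z] for which one of finitely
   many [z + n] falls into a hole avoided by the centre; measure estimates on the holes
   bound this exceptional set by a quarter of the cylinder. This gives full support, and
   translating one such cylinder onto another gives transitivity; sending the centre into
   a hole that most of its cylinder avoids gives sensitivity. *)

Lemma Eq_syn_not_thickly_sensitive (Y : Type) (d : Y -> Y -> R) (T : Y -> Y) (y : Y) :
  Eq_syn Y d T y -> ~ thickly_sensitive Y d T.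
Proof.
  intros Hy [del [Hdel H]].
  destruct (Hy del Hdel) as [U [HU [HUy [L HL]]]].
  destruct (H U (conj HU (ex_intro _ _ HUy)) L) as [a Ha].
  destruct (HL a) as [i [Hi HJ]]. apply HJ, Ha, Hi.
Qed.

(** * The 2-adic odometer *)

Notation Z2 := (nat -> bool).

Open Scope nat_scope.

(* A 2-adic integer is its sequence of binary digits, least significant first;
   [res k z] is [z mod 2^k]. *)
Fixpoint res (k : nat) (z : Z2) : nat :=
  match k with 0 => 0 | S k => res k z + 2^k * Nat.b2n (z k) end.

Lemma res_S k z : res (S k) z = res k z + 2^k * Nat.b2n (z k).
Proof. reflexivity. Qed.

Lemma pow2_pos k : 0 < 2^k.
Proof. apply Nat.neq_0_lt_0, Nat.pow_nonzero; lia. Qed.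

Lemma pow2_gt k : k < 2^k.
Proof. apply Nat.pow_gt_lin_r; lia. Qed.

Lemma pow2_split a b : b <= a -> 2^a = 2^(a - b) * 2^b.
Proof. intros H. rewrite <- Nat.pow_add_r. f_equal. lia. Qed.

Lemma res_lt k z : res k z < 2^k.
Proof. induction k; simpl; [lia|]. destruct (z k); simpl; lia. Qed.

Lemma res_ext k z z' : (forall i, i < k -> z i = z' i) -> res k z = res k z'.
Proof.
  induction k; intros H; simpl; [auto|]. rewrite IHk by (intros; apply H; lia).
  rewrite (H k) by lia; auto.
Qed.

Lemma res_inj k z z' : res k z = res k z' -> forall i, i < k -> z i = z' i.
Proof.
  induction k; intros H i Hi; [lia|]. simpl in H.
  pose proof (res_lt k z); pose proof (res_lt k z').
  assert (Hb : Nat.b2n (z k) = Nat.b2n (z' k)) by (destruct (z k), (z' k); simpl in *; nia).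
  destruct (Nat.eq_dec i k) as [->|].
  - destruct (z k), (z' k); simpl in Hb; congruence.
  - apply IHk; [rewrite Hb in H; lia | lia].
Qed.

Lemma res_eq_iff k a b : (forall i, i < k -> a i = b i) <-> res k a = res k b.
Proof. split; [apply res_ext | apply res_inj]. Qed.

Lemma Z2_ext (a b : Z2) : (forall k, res k a = res k b) -> a = b.
Proof. intros H. extensionality i. apply (res_inj (S i)); auto. Qed.

Lemma res_mod k k' z : k <= k' -> res k z = res k' z mod 2^k.
Proof.
  intros H. replace k' with (k + (k' - k)) by lia. induction (k' - k) as [|d IH].
  - rewrite Nat.add_0_r, Nat.mod_small; auto using res_lt.
  - replace (k + S d) with (S (k + d)) by lia. simpl.
    rewrite Nat.pow_add_r, <- Nat.mul_assoc, Nat.mul_comm, Nat.Div0.mod_add. auto.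
Qed.

Definition of_nat (N : nat) : Z2 := Nat.testbit N.

Lemma res_of_nat k N : res k (of_nat N) = N mod 2^k.
Proof.
  induction k.
  - cbn [res Nat.pow]. rewrite Nat.mod_1_r. auto.
  - simpl res. rewrite IHk. unfold of_nat. rewrite Nat.testbit_spec'.
    rewrite Nat.pow_succ_r', (Nat.mul_comm 2 (2^k)), Nat.Div0.mod_mul_r. auto.
Qed.

Lemma res_of_nat_small k v : v < 2^k -> res k (of_nat v) = v.
Proof. intros Hv. rewrite res_of_nat, Nat.mod_small; auto. Qed.

Lemma res_spec k w v : res k w = v <-> (v < 2^k /\ forall i, i < k -> w i = Nat.testbit v i).
Proof.
  split.
  - intros <-. split; [apply res_lt|]. intros i Hi.
    apply (res_inj k); auto. rewrite res_of_nat, Nat.mod_small; auto using res_lt.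
  - intros [H1 H2]. rewrite (res_ext k w (of_nat v)) by auto.
    rewrite res_of_nat, Nat.mod_small; auto.
Qed.

Lemma res_ones k : res k (fun _ => true) = 2^k - 1.
Proof.
  induction k; simpl res; auto. rewrite IHk, Nat.pow_succ_r'.
  pose proof (pow2_pos k). cbn [Nat.b2n]. lia.
Qed.

Lemma res_zeros k : res k (fun _ => false) = 0.
Proof. apply res_spec. split; [apply pow2_pos|]. intros i _. rewrite Nat.bits_0. auto. Qed.

(* Adding one flips digit [i] exactly when all lower digits are [1] (carry). *)
Definition succ (z : Z2) : Z2 := fun i => xorb (z i) (Nat.eqb (res i z + 1) (2^i)).

Definition pred (z : Z2) : Z2 := fun i => xorb (z i) (Nat.eqb (res i z) 0).

Lemma res_succ k z : res k (succ z) = (res k z + 1) mod 2^k.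
Proof.
  induction k; [reflexivity|].
  simpl res. rewrite IHk. unfold succ. rewrite Nat.pow_succ_r'.
  pose proof (res_lt k z). pose proof (pow2_pos k).
  destruct (Nat.eqb_spec (res k z + 1) (2^k)) as [E|E].
  - rewrite E, Nat.Div0.mod_same.
    destruct (z k); cbn [Nat.b2n xorb].
    + replace (res k z + 2^k * 1 + 1) with (2 * 2^k) by lia. rewrite Nat.Div0.mod_same. lia.
    + rewrite Nat.mod_small; lia.
  - rewrite (Nat.mod_small (res k z + 1)) by lia. rewrite xorb_false_r.
    rewrite Nat.mod_small; [|destruct (z k); cbn [Nat.b2n]; lia].
    destruct (z k); cbn [Nat.b2n xorb]; lia.
Qed.

Lemma res_pred k z : res k (pred z) = (res k z + (2^k - 1)) mod 2^k.
Proof.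
  induction k; [reflexivity|].
  simpl res. rewrite IHk. unfold pred. rewrite Nat.pow_succ_r'.
  pose proof (res_lt k z). pose proof (pow2_pos k).
  destruct (Nat.eqb_spec (res k z) 0) as [E|E].
  - rewrite E, (Nat.mod_small (0 + _)) by lia.
    destruct (z k); cbn [Nat.b2n xorb Nat.eqb].
    + replace (0 + 2 ^ k * 1 + (2 * 2 ^ k - 1)) with ((2^k - 1) + 1 * (2 * 2^k)) by lia.
      rewrite Nat.Div0.mod_add, Nat.mod_small; lia.
    + rewrite Nat.mod_small; lia.
  - replace (res k z + (2 ^ k - 1)) with ((res k z - 1) + 1 * 2^k) by lia.
    rewrite Nat.Div0.mod_add, Nat.mod_small, xorb_false_r by lia.
    replace (res k z + 2 ^ k * Nat.b2n (z k) + (2 * 2 ^ k - 1)) with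
      ((res k z - 1 + 2^k * Nat.b2n (z k)) + 1 * (2 * 2^k)) by lia.
    rewrite Nat.Div0.mod_add, Nat.mod_small; auto. destruct (z k); simpl; lia.
Qed.

Lemma succ_pred z : succ (pred z) = z.
Proof.
  apply Z2_ext; intros k. rewrite res_succ, res_pred, Nat.Div0.add_mod_idemp_l.
  pose proof (res_lt k z). pose proof (pow2_pos k).
  replace (res k z + (2 ^ k - 1) + 1) with (res k z + 1 * 2^k) by lia.
  rewrite Nat.Div0.mod_add, Nat.mod_small; lia.
Qed.

Lemma succ_agree k a b : (forall i, i < k -> a i = b i) -> forall i, i < k -> succ a i = succ b i.
Proof. rewrite !res_eq_iff, !res_succ. congruence. Qed.

Lemma pred_agree k a b : (forall i, i < k -> a i = b i) -> forall i, i < k -> pred a i = pred b i.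
Proof. rewrite !res_eq_iff, !res_pred. congruence. Qed.

Definition add (z : Z2) (n : nat) : Z2 := Nat.iter n succ z.

Lemma res_add k z n : res k (add z n) = (res k z + n) mod 2^k.
Proof.
  induction n.
  - unfold add; simpl. rewrite Nat.add_0_r, Nat.mod_small; auto using res_lt.
  - unfold add in *. simpl Nat.iter. rewrite res_succ, IHn, Nat.Div0.add_mod_idemp_l.
    f_equal. lia.
Qed.

Lemma add_succ z n : add z (S n) = add (succ z) n.
Proof. unfold add. rewrite Nat.iter_succ_r. auto. Qed.

Lemma add_add z a b : add z (a + b) = add (add z a) b.
Proof. unfold add. rewrite Nat.add_comm, Nat.iter_add. auto. Qed.

Lemma res_add_eq k a b n : res k a = res k b -> res k (add a n) = res k (add b n).
Proof. intros H; rewrite !res_add, H; auto. Qed.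

Lemma succ_carry k a : (forall i, i < k -> a i = true) -> a k = false ->
  (forall i, i <= k -> succ a i = Nat.eqb i k) /\ (forall i, k < i -> succ a i = a i).
Proof.
  intros Hones Hk.
  assert (Hlow : forall i, i <= k -> res i a = 2^i - 1).
  { intros i Hi. rewrite <- res_ones. apply res_ext. intros; apply Hones; lia. }
  pose proof (pow2_pos k).
  split; intros i Hi; unfold succ.
  - rewrite Hlow, Nat.sub_add by (auto; apply pow2_pos). rewrite Nat.eqb_refl.
    destruct (Nat.eq_dec i k) as [->|Hne].
    + rewrite Hk, Nat.eqb_refl. auto.
    + rewrite Hones, (proj2 (Nat.eqb_neq i k)) by lia. auto.
  - replace (Nat.eqb (res i a + 1) (2^i)) with false; [apply xorb_false_r|].
    symmetry. apply Nat.eqb_neq. intros E.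
    assert (Hres : res i a = res i (fun _ => true))
      by (rewrite res_ones; pose proof (pow2_pos i); lia).
    pose proof (res_inj i _ _ Hres k Hi). congruence.
Qed.

(** * The holes and the coding map *)

(* [in_hole z] is [z \in O = \bigcup_j (j + 2^(j+2) Z_2)], and [code z n = 1_C (z + n)]
   with [C] the complement of [O]. *)
Definition in_hole (z : Z2) : Prop := exists j, res (j+2) z = j.

Definition code (z : Z2) (n : nat) : bool :=
  if excluded_middle_informative (in_hole (add z n)) then false else true.

Lemma code_true z n : code z n = true <-> ~ in_hole (add z n).
Proof. unfold code; destruct excluded_middle_informative; split; intros; auto; congruence. Qed.

Lemma code_false z n : code z n = false <-> in_hole (add z n).
Proof. unfold code; destruct excluded_middle_informative; split; intros; auto; try congruence; tauto. Qed.

Lemma code_succ z n : code (succ z) n = code z (S n).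
Proof. unfold code. rewrite add_succ. auto. Qed.

Lemma of_nat_in_hole n : in_hole (add (fun _ => false) n).
Proof.
  exists n. rewrite res_add, res_zeros. apply Nat.mod_small. pose proof (pow2_gt (n+2)). lia.
Qed.

Lemma minus_one_not_in_hole : ~ in_hole (fun _ => true).
Proof. intros [j Hj]. rewrite res_ones in Hj. pose proof (pow2_gt (j+2)). lia. Qed.

(** * The space of pairs of digit sequences *)

Definition point : Type := (Z2 * (nat -> bool))%type.

Definition agree (p q : point) (k : nat) : Prop :=
  forall i, i < k -> fst p i = fst q i /\ snd p i = snd q i.

Lemma agree_sym p q k : agree p q k -> agree q p k.
Proof. intros H i Hi; destruct (H i Hi); split; auto. Qed.

Lemma agree_trans p q r k : agree p q k -> agree q r k -> agree p r k.
Proof. intros H1 H2 i Hi; destruct (H1 i Hi), (H2 i Hi); split; congruence. Qed.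

Lemma agree_le p q k k' : k' <= k -> agree p q k -> agree p q k'.
Proof. intros H1 H2 i Hi; apply H2; lia. Qed.

Lemma exists_least (P : nat -> Prop) :
  (exists n, P n) -> exists n, P n /\ forall m, m < n -> ~ P m.
Proof.
  intros [n Hn]. revert Hn. induction n as [n IH] using lt_wf_ind. intros Hn.
  destruct (classic (exists m, m < n /\ P m)) as [[m [Hm1 Hm2]]|Hno].
  - apply (IH m Hm1 Hm2).
  - exists n; split; auto. intros m Hm HP; apply Hno; eauto.
Qed.

Open Scope R_scope.

Definition differ (p q : point) (i : nat) : Prop := ~ (fst p i = fst q i /\ snd p i = snd q i).

Definition first_difference (p q : point) (H : exists i, differ p q i) : nat :=
  proj1_sig (constructive_indefinite_description _ (exists_least _ H)).

Definition dpt (p q : point) : R :=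
  match excluded_middle_informative (exists i, differ p q i) with
  | left H => (/2)^(first_difference p q H)
  | right _ => 0
  end.

Lemma dpt_cases p q : (p = q /\ dpt p q = 0) \/
  (exists n, dpt p q = (/2)^n /\ differ p q n /\ forall m, (m < n)%nat -> ~ differ p q m).
Proof.
  unfold dpt. destruct excluded_middle_informative as [H|H].
  - right. exists (first_difference p q H). split; auto.
    unfold first_difference. destruct constructive_indefinite_description; simpl; auto.
  - left. split; auto. destruct p as [a b], q as [c e].
    assert (Hi : forall i, a i = c i /\ b i = e i) by (intros i; apply NNPP; intros Hn; eauto).
    f_equal; extensionality i; apply Hi.
Qed.

Lemma half_pow_pos n : 0 < (/2)^n.
Proof. apply pow_lt; lra. Qed.

Lemma half_pow_lt n m : (n < m)%nat -> (/2)^m < (/2)^n.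
Proof.
  intros H. rewrite !pow_inv. apply Rinv_lt_contravar.
  - apply Rmult_lt_0_compat; apply pow_lt; lra.
  - apply Rlt_pow; auto; lra.
Qed.

Lemma half_pow_le n m : (n <= m)%nat -> (/2)^m <= (/2)^n.
Proof.
  intros H. destruct (Nat.eq_dec n m); [subst; lra|]. left; apply half_pow_lt; lia.
Qed.

Lemma half_pow_small eps : 0 < eps -> exists k, (/2)^k < eps.
Proof.
  intros H. destruct (pow_lt_1_zero (/2) ltac:(rewrite Rabs_right; lra) eps H) as [N HN].
  exists N. specialize (HN N (le_n N)). rewrite Rabs_right in HN; auto.
  left; apply half_pow_pos.
Qed.

Lemma dpt_lt p q k : dpt p q < (/2)^k <-> agree p q (S k).
Proof.
  destruct (dpt_cases p q) as [[-> ->]|[n [-> [Hd Hm]]]].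
  - split; intros; [intros i _; split; auto | apply half_pow_pos].
  - split; intros H.
    + assert (k < n)%nat.
      { destruct (le_lt_dec n k); auto. exfalso. pose proof (half_pow_le n k l). lra. }
      intros i Hi. apply NNPP. intros Hn. apply (Hm i); [lia|exact Hn].
    + assert (k < n)%nat.
      { destruct (le_lt_dec n k); auto. exfalso. apply Hd. apply H. lia. }
      apply half_pow_lt; auto.
Qed.

Lemma dpt_le p q k : agree p q k -> dpt p q <= (/2)^k.
Proof.
  intros H. destruct (dpt_cases p q) as [[-> ->]|[n [-> [Hd Hm]]]].
  - left; apply half_pow_pos.
  - apply half_pow_le. destruct (le_lt_dec k n); auto. exfalso. apply Hd. apply H. auto.
Qed.

Lemma dpt_differ0 p q : differ p q 0 -> dpt p q = 1.
Proof.
  intros H. destruct (dpt_cases p q) as [[-> _]|[n [-> [Hd Hm]]]].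
  - exfalso; apply H; auto.
  - destruct n; auto. exfalso; apply (Hm 0%nat); auto; lia.
Qed.

Lemma dpt_ge0 p q : 0 <= dpt p q.
Proof. destruct (dpt_cases p q) as [[-> ->]|[n [-> _]]]; [lra| left; apply half_pow_pos]. Qed.

Lemma dpt_eq0 p q : dpt p q = 0 <-> p = q.
Proof.
  destruct (dpt_cases p q) as [[-> ->]|[n [-> [Hd _]]]]; [tauto|].
  split; intros H; [pose proof (half_pow_pos n); lra | subst; exfalso; apply Hd; auto].
Qed.

Lemma dpt_sym p q : dpt p q = dpt q p.
Proof.
  assert (Hs : forall i, differ p q i <-> differ q p i)
    by (unfold differ; split; intros H [H1 H2]; apply H; split; auto).
  destruct (dpt_cases p q) as [[-> ->]|[n [-> [Hd Hm]]]]; [auto|].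
  destruct (dpt_cases q p) as [[-> _]|[n' [-> [Hd' Hm']]]]; [exfalso; apply Hd; auto|].
  f_equal. destruct (lt_eq_lt_dec n n') as [[H|H]|H]; auto; exfalso.
  - apply (Hm' n H), Hs; auto.
  - apply (Hm n' H), Hs; auto.
Qed.

Lemma dpt_triangle p q r : dpt p r <= dpt p q + dpt q r.
Proof.
  pose proof (dpt_ge0 p q). pose proof (dpt_ge0 q r).
  destruct (dpt_cases p r) as [[-> ->]|[n [E [Hd Hm]]]]; [lra|].
  rewrite E. destruct (Rlt_le_dec (dpt p q) ((/2)^n)) as [H1|H1]; [|lra].
  destruct (Rlt_le_dec (dpt q r) ((/2)^n)) as [H2|H2]; [|lra].
  exfalso. apply dpt_lt in H1, H2. apply Hd.
  destruct (H1 n ltac:(lia)), (H2 n ltac:(lia)); split; congruence.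
Qed.

(** * The system: the orbit closure of the coding *)

Definition inX (p : point) : Prop := forall k, exists y, agree p (y, code y) k.

Definition X : Type := {p : point | inX p}.

Definition dX (x y : X) : R := dpt (proj1_sig x) (proj1_sig y).

Lemma X_eq (x y : X) : proj1_sig x = proj1_sig y -> x = y.
Proof.
  destruct x as [p hp], y as [q hq]; simpl; intros ->. f_equal. apply proof_irrelevance.
Qed.

Lemma inX_code_true z w i : inX (z, w) -> w i = true -> ~ in_hole (add z i).
Proof.
  intros HX Hw [j Hj].
  destruct (HX (S (i + j + 2))) as [y Hy].
  assert (Hyz : res (j+2) z = res (j+2) y)
    by (apply res_eq_iff; intros m Hm; destruct (Hy m ltac:(lia)); auto).
  destruct (Hy i ltac:(lia)) as [_ Hw']. simpl in Hw'. rewrite Hw in Hw'.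
  symmetry in Hw'. apply code_true in Hw'. apply Hw'.
  exists j. rewrite <- (res_add_eq _ _ _ _ Hyz). auto.
Qed.

Lemma inX_closed p : (forall k, exists q, inX q /\ agree p q k) -> inX p.
Proof.
  intros H k. destruct (H k) as [q [Hq Ha]]. destruct (Hq k) as [y Hy].
  exists y. eapply agree_trans; eauto.
Qed.

Definition graph_pt (z : Z2) : X :=
  exist _ (z, code z) (fun k => ex_intro _ z (fun i _ => conj eq_refl eq_refl)).

Definition shift_pt (p : point) : point := (succ (fst p), fun i => snd p (S i)).

Lemma shift_pt_inX p : inX p -> inX (shift_pt p).
Proof.
  intros H k. destruct (H (S k)) as [y Hy]. exists (succ y).
  intros i Hi. simpl. split.
  - apply (succ_agree (S k)); auto. intros m Hm; apply (Hy m Hm).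
  - rewrite code_succ. apply (Hy (S i)); lia.
Qed.

Definition TX (x : X) : X := exist _ (shift_pt (proj1_sig x)) (shift_pt_inX _ (proj2_sig x)).

Lemma iter_TX n x : proj1_sig (iterT X TX n x) =
  (add (fst (proj1_sig x)) n, fun i => snd (proj1_sig x) (n + i)%nat).
Proof.
  induction n.
  - simpl. destruct (proj1_sig x); auto.
  - unfold iterT in *. simpl Nat.iter. simpl proj1_sig. rewrite IHn. unfold shift_pt. simpl.
    f_equal. extensionality i. f_equal. lia.
Qed.

Lemma iter_graph_pt n z : iterT X TX n (graph_pt z) = graph_pt (add z n).
Proof.
  apply X_eq. rewrite iter_TX. simpl. f_equal. extensionality i.
  revert z. induction n; intros z; auto.
  rewrite add_succ. simpl. rewrite <- code_succ, <- IHn. auto.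
Qed.

Lemma TX_graph_pt z : TX (graph_pt z) = graph_pt (succ z).
Proof. apply (iter_graph_pt 1). Qed.

Lemma X_metric : is_metric X dX.
Proof.
  unfold is_metric, dX. split; [|split; [|split]].
  - intros; apply dpt_ge0.
  - intros x y. rewrite dpt_eq0. split; [apply X_eq | intros ->; auto].
  - intros; apply dpt_sym.
  - intros; apply dpt_triangle.
Qed.

Lemma open_of_agree (x : X) (k : nat) (U : X -> Prop) :
  (forall y, agree (proj1_sig x) (proj1_sig y) k -> U y) ->
  exists r, 0 < r /\ forall y, dX x y < r -> U y.
Proof.
  intros H. exists ((/2)^k). split; [apply half_pow_pos|]. intros y Hy.
  apply H. apply dpt_lt in Hy. eapply agree_le; [|exact Hy]. lia.
Qed.

Lemma open_agree (U : X -> Prop) (x : X) : is_open X dX U -> U x ->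
  exists K, forall y, agree (proj1_sig x) (proj1_sig y) K -> U y.
Proof.
  intros HU Hx. destruct (HU x Hx) as [r [Hr Hb]]. destruct (half_pow_small r Hr) as [K HK].
  exists (S K). intros y Ha. apply Hb. unfold dX. apply dpt_lt in Ha. lra.
Qed.

Lemma X_continuous : continuous_map X dX TX.
Proof.
  intros x eps Heps. destruct (half_pow_small eps Heps) as [k Hk].
  exists ((/2)^(S k)). split; [apply half_pow_pos|]. intros y Hy.
  unfold dX in *. apply dpt_lt in Hy.
  enough (dpt (proj1_sig (TX x)) (proj1_sig (TX y)) < (/2)^k) by lra.
  apply dpt_lt. intros i Hi. simpl. split.
  - apply (succ_agree (S k)); auto. intros m Hm; apply (Hy m); lia.
  - apply (Hy (S i)); lia.
Qed.

Definition scons (b : bool) (w : nat -> bool) : nat -> bool :=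
  fun i => match i with O => b | S i => w i end.

(* The missing digit [w_{-1}] of a preimage is chosen as a value taken by [code (pred y) 0]
   for infinitely many approximating [y]. *)
Lemma X_surjective : surjective_map X TX.
Proof.
  intros [[z w] hx].
  pose (yk k := proj1_sig (constructive_indefinite_description _ (hx k))).
  assert (Hyk : forall k, agree (z, w) (yk k, code (yk k)) k)
    by (intros k; unfold yk; destruct constructive_indefinite_description; auto).
  assert (Hb : exists b, forall k, exists k', (k <= k')%nat /\ code (pred (yk k')) 0 = b).
  { destruct (classic (forall k, exists k', (k <= k')%nat /\ code (pred (yk k')) 0 = true))
      as [H|H]; [exists true; auto|].
    exists false. apply not_all_ex_not in H. destruct H as [k0 Hk0].
    intros k. exists (Nat.max k k0). split; [lia|].
    apply not_true_is_false. intros E. apply Hk0. exists (Nat.max k k0); split; [lia|auto]. }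
  destruct Hb as [b Hb].
  assert (HX : inX (pred z, scons b w)).
  { intros k. destruct (Hb k) as [k' [Hk' Hbk]]. exists (pred (yk k')).
    intros i Hi. simpl. split.
    - apply (pred_agree k'); [|lia]. intros m Hm. apply (Hyk k' m Hm).
    - destruct i as [|i]; simpl; [auto|].
      rewrite <- code_succ, succ_pred. apply (Hyk k' i). lia. }
  exists (exist _ _ HX). apply X_eq. simpl. unfold shift_pt; simpl. rewrite succ_pred. auto.
Qed.

(* Compactness by bisection: if no finite subcover existed, some cylinder of every depth
   would not be finitely covered; their nested limit is a point of [X] (as [X] is closed)
   lying in an open set of the cover together with a whole cylinder. *)
Section Compactness.
Variable I : Type.
Variable U : I -> X -> Prop.
Hypothesis U_open : forall i, is_open X dX (U i).
Hypothesis U_cover : forall x, exists i, U i x.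

Definition finitely_covered (P : point) (k : nat) : Prop :=
  exists l : list I, forall x : X, agree (proj1_sig x) P k -> exists i, In i l /\ U i x.

Definition set_digits (P : point) (k : nat) (c : bool * bool) : point :=
  (fun i => if Nat.eqb i k then fst c else fst P i,
   fun i => if Nat.eqb i k then snd c else snd P i).

Lemma agree_set_digits P k c : agree P (set_digits P k c) k.
Proof. intros i Hi. unfold set_digits; simpl. destruct (Nat.eqb_spec i k); [lia|]. auto. Qed.

Lemma finitely_covered_split P k :
  (forall c, finitely_covered (set_digits P k c) (S k)) -> finitely_covered P k.
Proof.
  intros Hall.
  destruct (Hall (true,true)) as [l1 H1], (Hall (true,false)) as [l2 H2],
    (Hall (false,true)) as [l3 H3], (Hall (false,false)) as [l4 H4].
  exists (l1 ++ l2 ++ l3 ++ l4). intros x Hx.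
  assert (Ha : agree (proj1_sig x)
            (set_digits P k (fst (proj1_sig x) k, snd (proj1_sig x) k)) (S k)).
  { intros i Hi. unfold set_digits; simpl. destruct (Nat.eqb_spec i k) as [->|]; auto.
    apply Hx. lia. }
  destruct (fst (proj1_sig x) k), (snd (proj1_sig x) k);
    [destruct (H1 x Ha) as [i Hi] | destruct (H2 x Ha) as [i Hi]
    |destruct (H3 x Ha) as [i Hi] | destruct (H4 x Ha) as [i Hi]];
    exists i; rewrite !in_app_iff; tauto.
Qed.

Definition refine_uncovered (P : point) (k : nat) (H : ~ finitely_covered P k) :
  {P' : point | ~ finitely_covered P' (S k) /\ agree P P' k}.
Proof.
  assert (Hc : exists c, ~ finitely_covered (set_digits P k c) (S k)).
  { apply not_all_ex_not. intros Hall. apply H, finitely_covered_split. auto. }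
  destruct (constructive_indefinite_description _ Hc) as [c Hnc].
  exists (set_digits P k c). split; auto. apply agree_set_digits.
Defined.

Variable P0 : point.
Hypothesis P0_uncovered : ~ finitely_covered P0 0.

Fixpoint uncovered_chain (k : nat) : {P : point | ~ finitely_covered P k} :=
  match k with
  | O => exist _ P0 P0_uncovered
  | S k => let (P, H) := uncovered_chain k in
           exist _ (proj1_sig (refine_uncovered P k H)) (proj1 (proj2_sig (refine_uncovered P k H)))
  end.

Lemma uncovered_chain_agree k d :
  agree (proj1_sig (uncovered_chain k)) (proj1_sig (uncovered_chain (k + d))) k.
Proof.
  induction d.
  - rewrite Nat.add_0_r. intros i _; auto.
  - eapply agree_trans; [exact IHd|]. replace (k + S d)%nat with (S (k + d)) by lia.
    apply (agree_le _ _ (k + d)); [lia|]. simpl.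
    destruct (uncovered_chain (k + d)) as [P H]. apply (proj2 (proj2_sig (refine_uncovered P _ H))).
Qed.

Definition chain_limit : point :=
  (fun i => fst (proj1_sig (uncovered_chain (S i))) i,
   fun i => snd (proj1_sig (uncovered_chain (S i))) i).

Lemma chain_limit_agree k : agree chain_limit (proj1_sig (uncovered_chain k)) k.
Proof.
  intros i Hi. unfold chain_limit; simpl.
  replace k with (S i + (k - S i))%nat by lia. apply uncovered_chain_agree. lia.
Qed.

Lemma chain_limit_inX : inX chain_limit.
Proof.
  apply inX_closed. intros k. pose proof (chain_limit_agree k) as Hlim.
  destruct (uncovered_chain k) as [P HP].
  destruct (classic (exists x : X, agree (proj1_sig x) P k)) as [[x Hx]|Hn].
  - exists (proj1_sig x). split; [apply (proj2_sig x)|].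
    eapply agree_trans; [exact Hlim | apply agree_sym; auto].
  - exfalso. apply HP. exists nil. intros x Hx. exfalso. apply Hn; eauto.
Qed.

Lemma uncovered_absurd : False.
Proof.
  pose (xs := exist _ chain_limit chain_limit_inX : X).
  destruct (U_cover xs) as [i Hi]. destruct (open_agree (U i) xs (U_open i) Hi) as [k Hk].
  pose proof (chain_limit_agree k) as Hlim.
  destruct (uncovered_chain k) as [P HP]. apply HP. exists (i :: nil).
  intros x Hx. exists i. split; [left; auto|]. apply Hk.
  eapply agree_trans; [exact Hlim | apply agree_sym; auto].
Qed.

End Compactness.

Lemma X_compact : is_compact X dX.
Proof.
  intros I U Uo Uc. apply NNPP. intros Hn.
  refine (uncovered_absurd I U Uo Uc (fun _ => false, fun _ => false) _).
  intros [l Hl]. apply Hn. exists l. intros x. apply Hl. intros i Hi; lia.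
Qed.

Lemma X_TDS : TDS X dX TX.
Proof. split; [apply X_metric | split; [apply X_compact | split; [apply X_continuous | apply X_surjective]]]. Qed.

(** * Syndetic equicontinuity, non-minimality and a non-transitive point *)

Lemma res_zero_in_hole K z j : (j + 2 <= K)%nat -> res K z = 0%nat -> in_hole (add z j).
Proof.
  intros Hj Hz. exists j.
  rewrite res_add, (res_mod (j+2) K) by lia. rewrite Hz, Nat.Div0.mod_0_l.
  apply Nat.mod_small. pose proof (pow2_gt (j+2)). lia.
Qed.

Lemma shift_to_zero (v K : nat) : exists i, (i < 2^K)%nat /\ ((v + i) mod 2^K = 0)%nat.
Proof.
  pose proof (pow2_pos K). pose proof (Nat.mod_upper_bound v (2^K) ltac:(lia)).
  destruct (Nat.eq_dec (v mod 2^K) 0) as [E|E].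
  - exists 0%nat. rewrite Nat.add_0_r. split; auto.
  - exists (2^K - v mod 2^K)%nat. split; [lia|].
    rewrite <- Nat.Div0.add_mod_idemp_l.
    replace (v mod 2 ^ K + (2 ^ K - v mod 2 ^ K))%nat with (1 * 2^K)%nat by lia.
    apply Nat.Div0.mod_mul.
Qed.

(* Whenever [z + n = 0 mod 2^(m+2)], every point of the cylinder of [z] has its
   second coordinate [0] on [[n, n+m)], since [z + n + j] lies in the hole around [j]. *)
Lemma X_Eq_syn x : Eq_syn X dX TX x.
Proof.
  intros eps Heps. destruct (half_pow_small eps Heps) as [m Hm].
  set (K := (m + 2)%nat). set (zx := fst (proj1_sig x)).
  exists (fun y : X => res K (fst (proj1_sig y)) = res K zx). split; [|split; auto].
  - intros y Hy. apply open_of_agree with (S K). intros y' Ha. rewrite <- Hy.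
    symmetry. apply res_eq_iff. intros i Hi. apply (Ha i). lia.
  - exists (2^K)%nat. intros a. destruct (shift_to_zero (res K zx + a) K) as [i [Hi Hmod]].
    exists i. split; auto. intros [x1 [x2 [H1 [H2 Hd]]]].
    assert (Hz : forall y : X, res K (fst (proj1_sig y)) = res K zx ->
               res K (add (fst (proj1_sig y)) (a + i)) = 0%nat)
      by (intros y Hy; rewrite res_add, Hy, Nat.add_assoc; auto).
    assert (Hw : forall y : X, res K (fst (proj1_sig y)) = res K zx ->
               forall j, (j < m)%nat -> snd (proj1_sig y) (a + i + j)%nat = false).
    { intros y Hy j Hj. apply not_true_is_false. intros E.
      pose proof (Hz y Hy) as Hzy. destruct y as [[z w] hy]. simpl in *.
      apply (inX_code_true z w _ hy E). rewrite add_add.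
      apply (res_zero_in_hole K); [unfold K; lia | auto]. }
    enough (dX (iterT X TX (a + i) x1) (iterT X TX (a + i) x2) <= (/2)^m) by lra.
    unfold dX. apply dpt_le. rewrite !iter_TX. intros j Hj. simpl. split.
    + apply res_eq_iff with K; [|lia]. rewrite !Hz; auto.
    + rewrite !Hw; auto.
Qed.

Definition zero_second (x : X) : Prop := forall i, snd (proj1_sig x) i = false.

Lemma X_not_minimal : ~ minimal_sys X dX TX.
Proof.
  intros H.
  assert (Hc : is_closed X dX zero_second).
  { intros x Hx. apply not_all_ex_not in Hx. destruct Hx as [i Hi].
    apply open_of_agree with (S i). intros y Ha Hy. apply Hi.
    destruct (Ha i ltac:(lia)) as [_ ->]. apply Hy. }
  assert (Hne : exists y, zero_second y)
    by (exists (graph_pt (fun _ => false)); intros i; apply code_false, of_nat_in_hole).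
  specialize (H zero_second Hc (fun y Hy i => Hy (S i)) Hne (graph_pt (fun _ => true)) 0%nat).
  simpl in H. rewrite (proj2 (code_true _ 0)) in H; [discriminate|]. apply minus_one_not_in_hole.
Qed.

Lemma X_not_Tran : ~ Tran X dX TX (graph_pt (fun _ => false)).
Proof.
  intros H. destruct (H (graph_pt (fun _ => true)) (/2) ltac:(lra)) as [n Hn].
  rewrite iter_graph_pt in Hn. unfold dX in Hn. rewrite dpt_differ0 in Hn; [lra|].
  unfold differ. cbn [proj1_sig graph_pt fst snd]. intros [_ E].
  rewrite (proj2 (code_false _ _)) in E.
  - rewrite (proj2 (code_true _ _)) in E; [discriminate | apply minus_one_not_in_hole].
  - rewrite <- add_add. apply of_nat_in_hole.
Qed.

(** * Binary expansion of [[0,1)] *)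

Definition b2R (b : bool) : R := if b then 1 else 0.
Definition first_digit (t : R) : bool := if Rle_dec (/2) t then true else false.
Definition doubling (t : R) : R := 2 * t - b2R (first_digit t).
Fixpoint digit (i : nat) (t : R) : bool :=
  match i with O => first_digit t | S i => digit i (doubling t) end.
Definition phi (t : R) : Z2 := fun i => digit i t.

Fixpoint dyadic (k : nat) (a : Z2) : R :=
  match k with O => 0 | S k => (b2R (a 0%nat) + dyadic k (fun i => a (S i))) / 2 end.

Lemma dyadic_bounds k a : 0 <= dyadic k a /\ dyadic k a + (/2)^k <= 1.
Proof.
  revert a; induction k; intros a; simpl; [lra|].
  destruct (IHk (fun i => a (S i))). destruct (a 0%nat); simpl; lra.
Qed.

Lemma doubling_range t : 0 <= t < 1 -> 0 <= doubling t < 1.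
Proof. unfold doubling, first_digit; destruct Rle_dec; simpl; lra. Qed.

Lemma digits_prefix_iff k a t : 0 <= t < 1 ->
  ((forall i, (i < k)%nat -> digit i t = a i) <-> dyadic k a <= t < dyadic k a + (/2)^k).
Proof.
  revert a t; induction k; intros a t Ht.
  - simpl. split; intros; [lra| lia].
  - pose proof (IHk (fun i => a (S i)) (doubling t) (doubling_range t Ht)) as IH.
    pose proof (dyadic_bounds k (fun i => a (S i))) as Hb.
    simpl dyadic. simpl pow.
    set (q := dyadic k (fun i => a (S i))) in *.
    assert (E : (forall i, (i < S k)%nat -> digit i t = a i) <->
               (first_digit t = a 0%nat /\
                forall i, (i < k)%nat -> digit i (doubling t) = a (S i))).
    { split.
      - intros H; split; [apply (H 0%nat); lia|]. intros i Hi; apply (H (S i)); lia.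
      - intros [H1 H2] i Hi. destruct i; simpl; auto. apply H2; lia. }
    rewrite E, IH. clear E IH.
    unfold doubling, first_digit in *. destruct Rle_dec; destruct (a 0%nat); simpl;
      (split; [intros [H1 H2]; try discriminate; lra
              | intros H; split; [first [reflexivity | exfalso; lra] | lra]]).
Qed.

Lemma digit_tail k a t : 0 <= t < 1 -> (forall i, (i < k)%nat -> digit i t = a i) ->
  forall i, digit (k + i) t = digit i (2^k * (t - dyadic k a)).
Proof.
  revert a t; induction k; intros a t Ht H i.
  - simpl. f_equal. lra.
  - change (digit (S k + i) t) with (digit (k + i) (doubling t)).
    rewrite (IHk (fun i => a (S i)) (doubling t) (doubling_range t Ht))
      by (intros j Hj; apply (H (S j)); lia).
    replace (first_digit t) with (a 0%nat) by (symmetry; apply (H 0%nat); lia).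
    unfold doubling. replace (first_digit t) with (a 0%nat) by (symmetry; apply (H 0%nat); lia).
    f_equal. simpl dyadic. simpl pow. field.
Qed.

Lemma translate_prefix k a b t : 0 <= t < 1 -> (forall i, (i < k)%nat -> digit i t = a i) ->
  let t' := t - dyadic k a + dyadic k b in
  0 <= t' < 1 /\ (forall i, (i < k)%nat -> digit i t' = b i) /\
  (forall i, digit (k + i) t' = digit (k + i) t).
Proof.
  intros Ht Ha t'.
  pose proof (proj1 (digits_prefix_iff k a t Ht) Ha).
  pose proof (dyadic_bounds k a). pose proof (dyadic_bounds k b).
  assert (Ht' : 0 <= t' < 1) by (unfold t'; lra).
  assert (Hb : forall i, (i < k)%nat -> digit i t' = b i)
    by (apply (digits_prefix_iff k b t' Ht'); unfold t'; lra).
  split; auto. split; auto. intros i.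
  rewrite (digit_tail k a t Ht Ha), (digit_tail k b t' Ht' Hb). unfold t'. do 2 f_equal. ring.
Qed.

Lemma dyadic_ones_zero k : dyadic (S k) (fun i => Nat.ltb i k) = 1 - (/2)^k.
Proof.
  induction k; [simpl; lra|].
  change (dyadic (S (S k)) (fun i => Nat.ltb i (S k)))
    with ((b2R true + dyadic (S k) (fun i => Nat.ltb i k)) / 2).
  rewrite IHk. simpl. field.
Qed.

Lemma dyadic_zeros_one k : dyadic (S k) (fun i => Nat.eqb i k) = (/2)^(S k).
Proof.
  induction k; [simpl; lra|].
  change (dyadic (S (S k)) (fun i => Nat.eqb i (S k)))
    with ((b2R false + dyadic (S k) (fun i => Nat.eqb i k)) / 2).
  rewrite IHk. simpl. field.
Qed.

Lemma dyadic_ones k : dyadic k (fun _ => true) = 1 - (/2)^k.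
Proof.
  induction k; [simpl; lra|].
  change (dyadic (S k) (fun _ => true)) with ((b2R true + dyadic k (fun _ => true))/2).
  rewrite IHk. simpl. field.
Qed.

(* On [Ik k] the digits start with [1^k 0]; [Ik k + ck k = Jk k], where they start with [0^k 1]. *)
Definition Ik (k : nat) (t : R) : Prop := 1 - (/2)^k <= t < 1 - (/2)^(S k).
Definition Jk (k : nat) (s : R) : Prop := (/2)^(S k) <= s < (/2)^k.
Definition ck (k : nat) : R := (/2)^(S k) - (1 - (/2)^k).

Lemma Jk_Ik k t : Jk k (t + ck k) <-> Ik k t.
Proof. unfold Jk, Ik, ck. split; intros; lra. Qed.

Lemma Ik_range k t : Ik k t -> 0 <= t < 1.
Proof.
  unfold Ik; pose proof (half_pow_le 0 k ltac:(lia)); pose proof (half_pow_pos (S k)).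
  simpl in *; lra.
Qed.

Lemma Jk_range k s : Jk k s -> 0 < s < 1.
Proof.
  unfold Jk. intros H. pose proof (half_pow_pos (S k)).
  destruct k; simpl in *; [lra|]. pose proof (half_pow_le 0 k ltac:(lia)). simpl in *. lra.
Qed.

Lemma Ik_digits k t : Ik k t -> forall i, (i < S k)%nat -> digit i t = Nat.ltb i k.
Proof.
  intros H. apply (digits_prefix_iff (S k) _ t (Ik_range k t H)). rewrite dyadic_ones_zero.
  unfold Ik in H. simpl in *. lra.
Qed.

Lemma phi_translate k t : Ik k t -> 0 <= t + ck k < 1 /\ phi (t + ck k) = succ (phi t).
Proof.
  intros H. pose proof (Ik_digits k t H) as Hpre.
  destruct (translate_prefix (S k) _ (fun i => Nat.eqb i k) t (Ik_range k t H) Hpre)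
    as [H1 [H2 H3]].
  rewrite dyadic_ones_zero, dyadic_zeros_one in H1, H2, H3.
  replace (t - (1 - (/2)^k) + (/2)^(S k)) with (t + ck k) in H1, H2, H3 by (unfold ck; ring).
  destruct (succ_carry k (phi t)) as [Hs1 Hs2].
  - intros i Hi. unfold phi. rewrite Hpre by lia. apply Nat.ltb_lt. lia.
  - unfold phi. rewrite Hpre by lia. apply Nat.ltb_irrefl.
  - split; auto. extensionality i. unfold phi at 1.
    destruct (le_lt_dec i k) as [Hi|Hi].
    + rewrite H2, Hs1 by lia. auto.
    + rewrite Hs2 by lia. replace i with (S k + (i - S k))%nat by lia. apply H3.
Qed.

Lemma Ik_cover t : 0 <= t < 1 -> exists k, Ik k t.
Proof.
  intros Ht.
  destruct (classic (exists k, digit k t = false)) as [Hex|Hno].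
  - destruct (exists_least _ Hex) as [k [Hk Hm]]. exists k.
    assert (Hp : forall i, (i < S k)%nat -> digit i t = Nat.ltb i k).
    { intros i Hi. destruct (Nat.eq_dec i k) as [->|].
      - rewrite Nat.ltb_irrefl; auto.
      - rewrite (proj2 (Nat.ltb_lt i k)) by lia. apply not_false_is_true. apply Hm. lia. }
    apply (digits_prefix_iff (S k) _ t Ht) in Hp. rewrite dyadic_ones_zero in Hp.
    unfold Ik. simpl in *. lra.
  - exfalso. destruct (half_pow_small (1 - t) ltac:(lra)) as [K HK].
    assert (Hp : forall i, (i < K)%nat -> digit i t = true)
      by (intros i _; apply not_false_is_true; intros E; apply Hno; eauto).
    apply (digits_prefix_iff K (fun _ => true) t Ht) in Hp. rewrite dyadic_ones in Hp. lra.
Qed.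

Lemma Jk_cover s : 0 < s < 1 -> exists k, Jk k s.
Proof.
  intros Hs. destruct (half_pow_small s ltac:(lra)) as [n Hn].
  destruct (exists_least (fun n => (/2)^n <= s) (ex_intro _ n (Rlt_le _ _ Hn)))
    as [[|m] [Hm Hmin]]; [simpl in Hm; lra|].
  exists m. unfold Jk. split; [lra|]. apply Rnot_le_lt. apply Hmin. lia.
Qed.

Lemma Ik_disjoint k k' t : Ik k t -> Ik k' t -> k = k'.
Proof.
  unfold Ik. intros H1 H2. destruct (lt_eq_lt_dec k k') as [[H|H]|H]; auto; exfalso.
  - pose proof (half_pow_le (S k) k' H). lra.
  - pose proof (half_pow_le (S k') k H). lra.
Qed.

Lemma Jk_disjoint k k' s : Jk k s -> Jk k' s -> k = k'.
Proof.
  unfold Jk. intros H1 H2. destruct (lt_eq_lt_dec k k') as [[H|H]|H]; auto; exfalso.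
  - pose proof (half_pow_le (S k) k' H). lra.
  - pose proof (half_pow_le (S k') k H). lra.
Qed.

Open Scope nat_scope.

(* At a high level [L] the residues of the [y + n] outside the holes sit in the upper half
   of [[0, 2^L)]; this keeps the holes they can meet in the cylinder of [y] small. *)
Definition high_level (y : Z2) (K L : nat) : Prop :=
  forall n, n < K -> ~ in_hole (add y n) -> 2^(L-1) <= res L y + n < 2^L.

Lemma pow2_pred L : 1 <= L -> 2^L = 2 * 2^(L-1).
Proof. intros H. rewrite <- Nat.pow_succ_r'. f_equal. lia. Qed.

Lemma pow2_big L : L >= 6 -> 2 * L + 1 <= 2^(L-1).
Proof.
  intros H. induction H; [simpl; lia|].
  replace (S m - 1) with (S (m - 1)) by lia. rewrite Nat.pow_succ_r'. lia.
Qed.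

Lemma res_eventually_ones y q : (forall i, i >= q -> y i = true) ->
  forall L, L >= q -> res L y = 2^L - 2^q + res q y.
Proof.
  intros H L HL. induction HL; [pose proof (pow2_pos q); lia|].
  rewrite (res_S m), IHHL, H by lia. cbn [Nat.b2n].
  pose proof (Nat.pow_le_mono_r 2 q m ltac:(lia) HL). rewrite Nat.pow_succ_r'. lia.
Qed.

Lemma res_eventually_zeros y q : (forall i, i >= q -> y i = false) ->
  forall L, res L y = res q y mod 2^L.
Proof.
  intros H L. destruct (le_lt_dec L q); [apply res_mod; auto|].
  assert (E : forall m, m >= q -> res m y = res q y).
  { intros m Hm. induction Hm; auto. simpl. rewrite IHHm, H by lia. simpl. lia. }
  rewrite E by lia. rewrite Nat.mod_small; auto. pose proof (res_lt q y).
  pose proof (Nat.pow_le_mono_r 2 q L ltac:(lia) ltac:(lia)). lia.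
Qed.

Lemma high_level_eventually_ones y q K L : (forall i, i >= q -> y i = true) ->
  L >= q + 1 -> high_level y K L.
Proof.
  intros Hq HL n _ HO.
  assert (Hs : res q y + n < 2^q).
  { apply Nat.nle_gt. intros Hge. apply HO.
    exists (res q y + n - 2^q). set (a := res q y + n - 2^q). rewrite res_add.
    pose proof (pow2_gt (a+2)).
    destruct (le_lt_dec q (a+2)).
    - rewrite (res_eventually_ones y q Hq (a+2)) by lia.
      pose proof (Nat.pow_le_mono_r 2 q (a+2) ltac:(lia) ltac:(lia)).
      replace (2 ^ (a + 2) - 2 ^ q + res q y + n) with (a + 1 * 2^(a+2)) by lia.
      rewrite Nat.Div0.mod_add, Nat.mod_small; lia.
    - rewrite (res_mod (a+2) q), Nat.Div0.add_mod_idemp_l by lia.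
      replace (res q y + n) with (a + 2^(q - (a+2)) * 2^(a+2))
        by (rewrite <- pow2_split; lia).
      rewrite Nat.Div0.mod_add, Nat.mod_small; lia. }
  rewrite (res_eventually_ones y q Hq L) by lia.
  pose proof (Nat.pow_le_mono_r 2 q (L-1) ltac:(lia) ltac:(lia)).
  rewrite (pow2_pred L) by lia. lia.
Qed.

Lemma high_level_eventually_zeros y q K L : (forall i, i >= q -> y i = false) ->
  high_level y K L.
Proof.
  intros Hq n _ HO. exfalso. apply HO.
  exists (res q y + n). rewrite res_add, (res_eventually_zeros y q Hq), Nat.Div0.add_mod_idemp_l.
  apply Nat.mod_small. pose proof (pow2_gt (res q y + n + 2)). lia.
Qed.

Lemma high_level_one_after_zero y p K : p >= 1 -> y p = true -> y (p - 1) = false ->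
  K <= p -> high_level y K (p + 1).
Proof.
  intros Hp Hyp Hyp' HK n Hn _.
  assert (Ev : res (p+1) y = res (p-1) y + 2^p).
  { replace (p + 1) with (S (S (p - 1))) by lia. rewrite !res_S, Hyp'.
    replace (S (p - 1)) with p by lia. rewrite Hyp. cbn [Nat.b2n]. lia. }
  rewrite Ev. pose proof (res_lt (p-1) y). pose proof (pow2_gt (p-1)).
  replace (p + 1 - 1) with p by lia. rewrite (pow2_pred (p+1)), (pow2_pred p) by lia.
  replace (p + 1 - 1) with p by lia. rewrite (pow2_pred p) by lia. lia.
Qed.

Lemma exists_high_level y K L0 : exists L, L >= L0 /\ L >= K /\ L >= 6 /\ high_level y K L.
Proof.
  destruct (classic (exists q, forall i, i >= q -> y i = true)) as [[q Hq]|H1].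
  { exists (Nat.max L0 (Nat.max (q+1) (Nat.max K 6))).
    do 3 (split; [lia|]). apply (high_level_eventually_ones y q); auto; lia. }
  destruct (classic (exists q, forall i, i >= q -> y i = false)) as [[q Hq]|H2].
  { exists (Nat.max L0 (Nat.max K 6)). do 3 (split; [lia|]).
    apply (high_level_eventually_zeros y q); auto. }
  set (M := Nat.max L0 (Nat.max K 6)).
  assert (Hz : exists i, i >= M /\ y i = false).
  { apply NNPP. intros Hn. apply H1. exists M. intros i Hi.
    apply not_false_is_true. intros E. apply Hn; eauto. }
  destruct Hz as [i0 [Hi0 Hyi0]].
  assert (Ho : exists i, i >= i0 /\ y i = true).
  { apply NNPP. intros Hn. apply H2. exists i0. intros i Hi.
    apply not_true_is_false. intros E. apply Hn; eauto. }
  destruct (exists_least _ Ho) as [p [[Hp1 Hp2] Hpm]].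
  assert (Hpi0 : p <> i0) by (intros ->; congruence).
  exists (p + 1). do 3 (split; [lia|]). apply high_level_one_after_zero; auto; try lia.
  apply not_true_is_false. intros E. apply (Hpm (p-1)); [lia| split; auto; lia].
Qed.

(* Holes met by [y + n] at depth at most [L] are met by every [z + n] with [z = y mod 2^L]. *)
Lemma graph_agree_of_res y z K L : (K <= L)%nat -> res L z = res L y ->
  (forall n, (n < K)%nat -> in_hole (add y n) ->
     exists j, (j + 2 <= L)%nat /\ res (j+2) (add y n) = j) ->
  (forall n, (n < K)%nat -> in_hole (add z n) -> in_hole (add y n)) ->
  agree (z, code z) (y, code y) K.
Proof.
  intros HKL Hz Hdepth Hnew i Hi. simpl. split; [apply (res_inj L); auto; lia|].
  destruct (classic (in_hole (add y i))) as [HO|HO].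
  - destruct (Hdepth i Hi HO) as [j [Hj1 Hj2]].
    assert (HOz : in_hole (add z i)).
    { exists j. rewrite res_add, (res_mod (j+2) L z), Hz by lia.
      rewrite <- (res_mod (j+2) L y), <- res_add by lia. auto. }
    rewrite (proj2 (code_false y i) HO), (proj2 (code_false z i) HOz). auto.
  - assert (HOz : ~ in_hole (add z i)) by (intros H; apply HO, Hnew; auto).
    rewrite (proj2 (code_true y i) HO), (proj2 (code_true z i) HOz). auto.
Qed.

Open Scope R_scope.

(** * Lebesgue measure on [[0,1)] *)

(* Sigma-additivity is only required for subsets of [[0,1)], where all measures are finite. *)
Record interval_measure := IntervalMeasure {
  lmeas : (R -> Prop) -> R;
  lmble : (R -> Prop) -> Prop;
  lmble_Ico : forall a b, lmble (fun x => a <= x < b);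
  lmble_compl : forall D, lmble D -> lmble (fun x => ~ D x);
  lmble_union : forall D : nat -> R -> Prop, (forall n, lmble (D n)) ->
    lmble (fun x => exists n, D n x);
  lmble_translate : forall D c, lmble D -> lmble (fun x => D (x + c));
  lmeas_Ico : forall a b, a <= b -> lmeas (fun x => a <= x < b) = b - a;
  lmeas_ge0 : forall D, 0 <= lmeas D;
  lmeas_sigma : forall D : nat -> R -> Prop, (forall n, lmble (D n)) ->
    (forall n x, D n x -> 0 <= x < 1) -> (forall m n x, m <> n -> D m x -> D n x -> False) ->
    infinite_sum (fun n => lmeas (D n)) (lmeas (fun x => exists n, D n x));
  lmeas_translate : forall D c, lmble D -> lmeas (fun x => D (x + c)) = lmeas D
}.

Section IntervalMeasure.
Variable Leb : interval_measure.
Local Notation lam := (lmeas Leb).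
Local Notation mble := (lmble Leb).

Lemma lmble_ext D E : (forall x, D x <-> E x) -> mble D -> mble E.
Proof.
  intros H. replace E with D; auto.
  extensionality x. apply propositional_extensionality. auto.
Qed.

Lemma lmeas_ext D E : (forall x, D x <-> E x) -> lam D = lam E.
Proof. intros H. f_equal. extensionality x. apply propositional_extensionality. auto. Qed.

Lemma lmble_empty : mble (fun _ => False).
Proof. apply lmble_ext with (fun x => 0 <= x < 0); [intros; split; lra | apply lmble_Ico]. Qed.

Lemma lmeas_empty D : (forall x, ~ D x) -> lam D = 0.
Proof.
  intros H. rewrite (lmeas_ext D (fun x => 0 <= x < 0)), lmeas_Ico; [lra|lra|].
  intros x; split; [intros Hx; exfalso; apply (H x Hx) | lra].
Qed.

Lemma lmble_or D E : mble D -> mble E -> mble (fun x => D x \/ E x).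
Proof.
  intros HD HE. apply lmble_ext with (fun x => exists n : nat, (if Nat.eqb n 0 then D else E) x).
  - intros x. split.
    + intros [n Hn]. destruct (Nat.eqb n 0); auto.
    + intros [H|H]; [exists 0%nat | exists 1%nat]; auto.
  - apply lmble_union. intros n. destruct (Nat.eqb n 0); auto.
Qed.

Lemma lmble_and D E : mble D -> mble E -> mble (fun x => D x /\ E x).
Proof.
  intros HD HE. apply lmble_ext with (fun x => ~ (~ D x \/ ~ E x)); [intros x; tauto|].
  apply lmble_compl, lmble_or; apply lmble_compl; auto.
Qed.

Lemma lmble_const_and (P : Prop) D : mble D -> mble (fun x => P /\ D x).
Proof.
  intros HD. destruct (classic P) as [HP|HP].
  - apply lmble_ext with D; auto. intros; tauto.
  - apply lmble_ext with (fun _ => False); [intros; tauto | apply lmble_empty].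
Qed.

Lemma infinite_sum_eventually (f : nat -> R) (N : nat) (l : R) :
  (forall n, (n >= N)%nat -> sum_f_R0 f n = l) -> infinite_sum f l.
Proof.
  intros H eps Heps. exists N. intros n Hn. rewrite H by lia. unfold R_dist.
  rewrite Rminus_diag, Rabs_R0; auto.
Qed.

Lemma infinite_sum_le f l B : infinite_sum f l -> (forall N, sum_f_R0 f N <= B) -> l <= B.
Proof.
  intros Hs HB. apply Rnot_lt_le. intros Hlt.
  destruct (Hs (l - B) ltac:(lra)) as [N HN]. specialize (HN N (le_n N)). specialize (HB N).
  unfold R_dist in HN. apply Rabs_def2 in HN. lra.
Qed.

Lemma lmeas_or D E : mble D -> mble E -> (forall x, D x -> 0 <= x < 1) ->
  (forall x, E x -> 0 <= x < 1) -> (forall x, D x -> E x -> False) ->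
  lam (fun x => D x \/ E x) = lam D + lam E.
Proof.
  intros HD HE HD1 HE1 Hdisj.
  set (F := fun n : nat => match n with 0%nat => D | 1%nat => E | _ => fun _ => False end).
  assert (Hs := lmeas_sigma Leb F).
  rewrite (lmeas_ext _ (fun x => exists n, F n x)).
  2:{ intros x. split.
      - intros [H|H]; [exists 0%nat| exists 1%nat]; auto.
      - intros [[|[|n]] Hn]; simpl in Hn; tauto. }
  symmetry. apply (uniqueness_sum (fun n => lam (F n))).
  - apply infinite_sum_eventually with 1%nat. intros n Hn.
    induction n; [lia|]. destruct n; [simpl; auto|].
    rewrite tech5, IHn by lia. simpl. rewrite (lmeas_empty (fun _ => False)) by auto. ring.
  - apply Hs.
    + intros [|[|n]]; simpl; auto. apply lmble_empty.
    + intros [|[|n]] x; simpl; auto. tauto.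
    + intros [|[|m]] [|[|n]] x Hmn; simpl; try tauto; try lia; intros; eauto.
Qed.

Lemma lmeas_mono D E : mble D -> mble E -> (forall x, D x -> E x) ->
  (forall x, E x -> 0 <= x < 1) -> lam D <= lam E.
Proof.
  intros HD HE Hs Hr.
  rewrite (lmeas_ext E (fun x => D x \/ (E x /\ ~ D x))).
  - rewrite lmeas_or; auto.
    + pose proof (lmeas_ge0 Leb (fun x => E x /\ ~ D x)). lra.
    + apply lmble_and; auto. apply lmble_compl; auto.
    + intros x [H1 _]; auto.
    + intros x H1 [_ H2]; auto.
  - intros x. split; [intros H; destruct (classic (D x)); auto | intros [H|[H _]]; auto].
Qed.

Lemma lmeas_union_le (D : nat -> R -> Prop) B : (forall n, mble (D n)) ->
  (forall n x, D n x -> 0 <= x < 1) -> (forall N, sum_f_R0 (fun n => lam (D n)) N <= B) ->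
  lam (fun x => exists n, D n x) <= B.
Proof.
  intros HD Hr HB.
  set (D' := fun n x => D n x /\ ~ exists m, (m < n)%nat /\ D m x).
  assert (HD' : forall n, mble (D' n)).
  { intros n. apply lmble_and; auto. apply lmble_compl, lmble_union.
    intros m. apply lmble_const_and; auto. }
  rewrite (lmeas_ext _ (fun x => exists n, D' n x)).
  2:{ intros x. split.
      - intros Hex. destruct (exists_least _ Hex) as [n [Hn Hm]]. exists n. split; auto.
        intros [m [Hm1 Hm2]]. apply (Hm m Hm1 Hm2).
      - intros [n [Hn _]]; eauto. }
  apply (infinite_sum_le (fun n => lam (D' n))).
  - apply (lmeas_sigma Leb D' HD' (fun n x H => Hr n x (proj1 H))).
    intros m n x Hmn [H1 H2] [H3 H4].
    destruct (lt_eq_lt_dec m n) as [[Hlt|Heq]|Hgt]; [apply H4; eauto | auto | apply H2; eauto].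
  - intros N. eapply Rle_trans; [|apply (HB N)]. apply sum_Rle. intros n _.
    apply lmeas_mono; auto. intros x [Hx _]; auto. apply Hr.
Qed.

Lemma lmeas_null_at_0 D : mble D -> (forall x, D x -> x = 0) -> lam D = 0.
Proof.
  intros HD H0. apply Rle_antisym; [|apply lmeas_ge0].
  apply Rnot_lt_le. intros Hp. destruct (half_pow_small (lam D) Hp) as [N HN].
  assert (lam D <= lam (fun x => 0 <= x < (/2)^N)).
  { apply lmeas_mono; auto; [apply lmble_Ico| |].
    - intros x Hx. rewrite (H0 x Hx). split; [lra|apply half_pow_pos].
    - intros x Hx. pose proof (half_pow_le 0 N ltac:(lia)). simpl in *. lra. }
  rewrite lmeas_Ico in H by (left; apply half_pow_pos). lra.
Qed.

Lemma lmeas_Jk_union D : mble D -> (forall x, D x -> 0 <= x < 1) ->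
  lam (fun s => exists k, Jk k s /\ D s) = lam D.
Proof.
  intros HD HD1.
  assert (HJ : mble (fun x => exists k, Jk k x /\ D x))
    by (apply lmble_union; intros; apply lmble_and; [apply lmble_Ico | auto]).
  assert (HN : mble (fun x => D x /\ ~ exists k, Jk k x))
    by (apply lmble_and; auto; apply lmble_compl, lmble_union; intros; apply lmble_Ico).
  rewrite (lmeas_ext D (fun x => (exists k, Jk k x /\ D x) \/ (D x /\ ~ exists k, Jk k x))).
  2:{ intros x. split; [|intros [[k [_ Hx]]|[Hx _]]; auto].
      intros Hx. destruct (classic (exists k, Jk k x)) as [[k Hk]|Hn]; [left | right]; eauto. }
  rewrite lmeas_or; auto.
  - rewrite (lmeas_null_at_0 (fun x => D x /\ ~ (exists k, Jk k x))); [ring|auto|].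
    intros x [Hx Hn]. destruct (HD1 x Hx) as [[Hpos|Hz] H1]; auto. exfalso.
    apply Hn, Jk_cover. lra.
  - intros x [k [Hk _]]. pose proof (Jk_range k x Hk). lra.
  - intros x [Hx _]; auto.
  - intros x [k [Hk _]] [_ Hno]. apply Hno; eauto.
Qed.

(* The translations [Ik k -> Jk k] reassemble [[0,1)] up to the point [0]. *)
Lemma lmeas_piecewise_translate D : mble D -> (forall x, D x -> 0 <= x < 1) ->
  let D' := fun t => exists k, Ik k t /\ D (t + ck k) in
  mble D' /\ lam D' = lam D.
Proof.
  intros HD HD1 D'.
  set (F := fun k t => Ik k t /\ D (t + ck k)).
  set (G := fun k s => Jk k s /\ D s).
  assert (HF : forall k, mble (F k))
    by (intros k; apply lmble_and; [apply lmble_Ico | apply lmble_translate; auto]).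
  assert (HG : forall k, mble (G k)) by (intros k; apply lmble_and; [apply lmble_Ico | auto]).
  split; [apply lmble_union; auto|].
  assert (SF := lmeas_sigma Leb F HF (fun k t H => Ik_range k t (proj1 H))
     (fun m n x Hmn H1 H2 => Hmn (Ik_disjoint m n x (proj1 H1) (proj1 H2)))).
  assert (SG := lmeas_sigma Leb G HG
     (fun k t H => conj (Rlt_le _ _ (proj1 (Jk_range k t (proj1 H)))) (proj2 (Jk_range k t (proj1 H))))
     (fun m n x Hmn H1 H2 => Hmn (Jk_disjoint m n x (proj1 H1) (proj1 H2)))).
  assert (EFG : (fun k => lam (F k)) = (fun k => lam (G k))).
  { extensionality k. rewrite <- (lmeas_translate Leb (G k) (ck k)) by auto. apply lmeas_ext.
    intros t. unfold F, G. rewrite Jk_Ik. tauto. }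
  rewrite <- (lmeas_Jk_union D HD HD1). rewrite EFG in SF.
  exact (uniqueness_sum _ _ _ SF SG).
Qed.

(** * Haar measure on the 2-adic integers *)

Definition haar_set (S : Z2 -> Prop) : R -> Prop := fun t => 0 <= t < 1 /\ S (phi t).
Definition hmble (S : Z2 -> Prop) : Prop := mble (haar_set S).
Definition haar (S : Z2 -> Prop) : R := lam (haar_set S).

Lemma haar_set_range S t : haar_set S t -> 0 <= t < 1.
Proof. intros [H _]; auto. Qed.

Lemma hmble_ext S S' : (forall z, S z <-> S' z) -> hmble S -> hmble S'.
Proof. intros H. apply lmble_ext. intros t. unfold haar_set. rewrite H. tauto. Qed.

Lemma haar_ext S S' : (forall z, S z <-> S' z) -> haar S = haar S'.
Proof. intros H. apply lmeas_ext. intros t. unfold haar_set. rewrite H. tauto. Qed.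

Lemma hmble_compl S : hmble S -> hmble (fun z => ~ S z).
Proof.
  intros H. apply lmble_ext with (fun t => 0 <= t < 1 /\ ~ haar_set S t).
  - intros t. unfold haar_set. tauto.
  - apply lmble_and; [apply lmble_Ico | apply lmble_compl; auto].
Qed.

Lemma hmble_union (S : nat -> Z2 -> Prop) : (forall n, hmble (S n)) ->
  hmble (fun z => exists n, S n z).
Proof.
  intros H. apply lmble_ext with (fun t => exists n, haar_set (S n) t).
  - intros t. unfold haar_set. split; [intros [n [H1 H2]]; split; eauto | intros [H1 [n H2]]; eauto].
  - apply lmble_union; auto.
Qed.

Lemma hmble_and S S' : hmble S -> hmble S' -> hmble (fun z => S z /\ S' z).
Proof.
  intros H H'. apply lmble_ext with (fun t => haar_set S t /\ haar_set S' t).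
  - intros t; unfold haar_set; tauto.
  - apply lmble_and; auto.
Qed.

Lemma hmble_or S S' : hmble S -> hmble S' -> hmble (fun z => S z \/ S' z).
Proof.
  intros H H'. apply lmble_ext with (fun t => haar_set S t \/ haar_set S' t).
  - intros t; unfold haar_set; tauto.
  - apply lmble_or; auto.
Qed.

Lemma hmble_const_and (P : Prop) S : hmble S -> hmble (fun z => P /\ S z).
Proof.
  intros H. apply lmble_ext with (fun t => P /\ haar_set S t).
  - intros t; unfold haar_set; tauto.
  - apply lmble_const_and; auto.
Qed.

Lemma hmble_True : hmble (fun _ => True).
Proof. apply lmble_ext with (fun t => 0 <= t < 1); [intros t; unfold haar_set; tauto | apply lmble_Ico]. Qed.

Lemma hmble_False : hmble (fun _ => False).
Proof. apply lmble_ext with (fun _ => False); [intros t; unfold haar_set; tauto | apply lmble_empty]. Qed.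

Lemma haar_True : haar (fun _ => True) = 1.
Proof.
  unfold haar. rewrite (lmeas_ext _ (fun t => 0 <= t < 1)), lmeas_Ico; [lra|lra|].
  intros t; unfold haar_set; tauto.
Qed.

Lemma haar_ge0 S : 0 <= haar S.
Proof. apply lmeas_ge0. Qed.

Lemma haar_pos_inhabited S : 0 < haar S -> exists z, S z.
Proof.
  intros H. apply NNPP. intros Hn. unfold haar in H. rewrite lmeas_empty in H; [lra|].
  intros t [_ Hz]. apply Hn; eauto.
Qed.

Lemma haar_set_cylinder k v t : (v < 2^k)%nat ->
  (haar_set (fun z => res k z = v) t <-> dyadic k (of_nat v) <= t < dyadic k (of_nat v) + (/2)^k).
Proof.
  intros Hv. pose proof (dyadic_bounds k (of_nat v)). unfold haar_set.
  assert (Hd : forall t, 0 <= t < 1 -> res k (phi t) = v <->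
            (forall i, (i < k)%nat -> digit i t = of_nat v i))
    by (intros t' Ht'; rewrite res_spec; unfold phi, of_nat; tauto).
  split.
  - intros [Ht Hz]. apply (digits_prefix_iff k _ t Ht), Hd; auto.
  - intros Ht. assert (Ht' : 0 <= t < 1) by lra. split; auto.
    apply Hd, (digits_prefix_iff k _ t Ht'); auto.
Qed.

Lemma hmble_cylinder k v : hmble (fun z => res k z = v).
Proof.
  destruct (lt_dec v (2^k)) as [Hv|Hv].
  - eapply lmble_ext; [|apply (lmble_Ico Leb (dyadic k (of_nat v)) (dyadic k (of_nat v) + (/2)^k))].
    intros t. rewrite haar_set_cylinder; tauto.
  - eapply lmble_ext; [|apply lmble_empty]. intros t. unfold haar_set. split; [tauto|].
    intros [_ H]. pose proof (res_lt k (phi t)). lia.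
Qed.

Lemma haar_cylinder k v : (v < 2^k)%nat -> haar (fun z => res k z = v) = (/2)^k.
Proof.
  intros Hv. unfold haar.
  rewrite (lmeas_ext _ (fun t => dyadic k (of_nat v) <= t < dyadic k (of_nat v) + (/2)^k)).
  - rewrite lmeas_Ico; [ring|]. pose proof (half_pow_pos k); lra.
  - intros t. apply haar_set_cylinder; auto.
Qed.

Lemma haar_set_succ S t : haar_set (fun z => S (succ z)) t <->
  (exists k, Ik k t /\ haar_set S (t + ck k)).
Proof.
  unfold haar_set. split.
  - intros [Ht HS]. destruct (Ik_cover t Ht) as [k Hk]. exists k. split; auto.
    destruct (phi_translate k t Hk) as [H1 H2]. split; auto. rewrite H2; auto.
  - intros [k [Hk [H1 H2]]]. destruct (phi_translate k t Hk) as [_ H3].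
    split; [apply (Ik_range k t Hk)|]. rewrite <- H3; auto.
Qed.

Lemma haar_succ S : hmble S -> hmble (fun z => S (succ z)) /\ haar (fun z => S (succ z)) = haar S.
Proof.
  intros H. destruct (lmeas_piecewise_translate (haar_set S) H (haar_set_range S)) as [H1 H2].
  split.
  - eapply lmble_ext; [|exact H1]. intros t. rewrite haar_set_succ. tauto.
  - unfold haar. rewrite <- H2. apply lmeas_ext. intros t. apply haar_set_succ.
Qed.

Lemma haar_add S n : hmble S -> hmble (fun z => S (add z n)) /\ haar (fun z => S (add z n)) = haar S.
Proof.
  revert S. induction n; intros S H; [split; [exact H | reflexivity]|].
  destruct (haar_succ S H) as [Hi Hm]. destruct (IHn _ Hi) as [H1 H2].
  split.
  - eapply hmble_ext; [|exact H1]. intros z; split; auto.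
  - rewrite <- Hm, <- H2. apply haar_ext. intros z; split; auto.
Qed.

Lemma hmble_in_hole_add n : hmble (fun z => in_hole (add z n)).
Proof.
  apply hmble_union. intros j. apply (proj1 (haar_add (fun z => res (j+2) z = j) n (hmble_cylinder _ _))).
Qed.

Lemma haar_mono S S' : hmble S -> hmble S' -> (forall z, S z -> S' z) -> haar S <= haar S'.
Proof.
  intros H H' Hs. apply lmeas_mono; auto; [|apply haar_set_range].
  intros t [Ht Hz]; split; auto.
Qed.

Lemma haar_or S S' : hmble S -> hmble S' -> (forall z, S z -> S' z -> False) ->
  haar (fun z => S z \/ S' z) = haar S + haar S'.
Proof.
  intros H H' Hd. unfold haar. rewrite <- lmeas_or; auto; try apply haar_set_range.
  - apply lmeas_ext. intros t; unfold haar_set; tauto.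
  - intros t [_ H1] [_ H2]; eauto.
Qed.

Lemma haar_union_le (S : nat -> Z2 -> Prop) B : (forall n, hmble (S n)) ->
  (forall N, sum_f_R0 (fun n => haar (S n)) N <= B) -> haar (fun z => exists n, S n z) <= B.
Proof.
  intros H HB. unfold haar. rewrite (lmeas_ext _ (fun t => exists n, haar_set (S n) t)).
  - apply lmeas_union_le; auto. intros n t Ht; apply (haar_set_range _ _ Ht).
  - intros t. unfold haar_set. split; [intros [H1 [n H2]]; eauto | intros [n [H1 H2]]; eauto].
Qed.

Lemma haar_or_le S1 S2 : hmble S1 -> hmble S2 -> haar (fun z => S1 z \/ S2 z) <= haar S1 + haar S2.
Proof.
  intros H1 H2.
  assert (H21 : hmble (fun z => S2 z /\ ~ S1 z)) by (apply hmble_and; [|apply hmble_compl]; auto).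
  rewrite (haar_ext _ (fun z => S1 z \/ (S2 z /\ ~ S1 z)))
    by (intros z; destruct (classic (S1 z)); tauto).
  rewrite haar_or by (auto; intros z Hz [_ Hn]; auto).
  enough (haar (fun z => S2 z /\ ~ S1 z) <= haar S2) by lra.
  apply haar_mono; auto. intros z [Hz _]; auto.
Qed.

Lemma tail_geometric_sum r N :
  sum_f_R0 (fun j => if Nat.leb r j then (/2)^(j+2) else 0) N =
  if Nat.ltb N r then 0 else (/2)^(r+1) - (/2)^(N+2).
Proof.
  induction N.
  - simpl. destruct r; simpl; [field | auto].
  - rewrite tech5, IHN. destruct (lt_dec (S N) r) as [H|H].
    + rewrite (proj2 (Nat.ltb_lt N r)), (proj2 (Nat.ltb_lt (S N) r)),
        (proj2 (Nat.leb_gt r (S N))) by lia. ring.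
    + rewrite (proj2 (Nat.ltb_ge (S N) r)), (proj2 (Nat.leb_le r (S N))) by lia.
      destruct (Nat.eq_dec (S N) r) as [E|E].
      * rewrite (proj2 (Nat.ltb_lt N r)) by lia. subst r.
        replace (S N + 2)%nat with (S (S N + 1)) by lia. rewrite <- tech_pow_Rmult. field.
      * rewrite (proj2 (Nat.ltb_ge N r)) by lia.
        replace (S N + 2)%nat with (S (N + 2)) by lia. rewrite <- tech_pow_Rmult. field.
Qed.

Lemma tail_geometric_sum_le r N :
  sum_f_R0 (fun j => if Nat.leb r j then (/2)^(j+2) else 0) N <= (/2)^(r+1).
Proof.
  rewrite tail_geometric_sum. destruct (Nat.ltb N r); [left; apply half_pow_pos|].
  pose proof (half_pow_pos (N+2)). lra.
Qed.

Lemma hmble_hole_add j n : hmble (fun z => res (j+2) (add z n) = j).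
Proof. apply (proj1 (haar_add (fun z => res (j+2) z = j) n (hmble_cylinder _ _))). Qed.

(* Inside the cylinder [res L z = v], the hole around [j] is reached by [z + n] only if
   [j >= r := (v + n) mod 2^L], and not at all if [j + 2 <= L] and [r] is not in it. *)
Lemma haar_cylinder_hole_le L v n j : (v < 2^L)%nat ->
  (j + 2 <= L -> (v + n) mod 2^(j+2) <> j)%nat ->
  haar (fun z => res L z = v /\ res (j+2) (add z n) = j) <=
  if Nat.leb ((v + n) mod 2^L) j then (/2)^(j+2) else 0.
Proof.
  intros Hv Hj. set (r := ((v + n) mod 2^L)%nat).
  assert (Hempty : (forall z, ~ (res L z = v /\ res (j+2) (add z n) = j)) ->
            haar (fun z => res L z = v /\ res (j+2) (add z n) = j) <= 0)
    by (intros H; right; apply lmeas_empty; intros t [_ Ht]; apply (H _ Ht)).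
  destruct (le_lt_dec (j+2) L) as [Hle|Hgt].
  - eapply Rle_trans; [apply Hempty|destruct (Nat.leb r j); [left; apply half_pow_pos|lra]].
    intros z [H1 H2]. apply (Hj Hle).
    rewrite res_add, (res_mod (j+2) L _ Hle), H1, Nat.Div0.add_mod_idemp_l in H2. auto.
  - destruct (Nat.leb_spec r j).
    + eapply Rle_trans; [apply (haar_mono _ (fun z => res (j+2) (add z n) = j))|].
      * apply hmble_and; [apply hmble_cylinder | apply hmble_hole_add].
      * apply hmble_hole_add.
      * intros z [_ Hz]; auto.
      * rewrite (proj2 (haar_add (fun z => res (j+2) z = j) n (hmble_cylinder _ _))).
        rewrite haar_cylinder by (pose proof (pow2_gt (j+2)); lia). lra.
    + apply Hempty. intros z [H1 H2].
      assert (E1 : res L (add z n) = r) by (rewrite res_add, H1; auto).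
      rewrite (res_mod L (j+2) _ ltac:(lia)), H2, Nat.mod_small in E1; [lia|].
      pose proof (Nat.mod_upper_bound (v+n) (2^L) ltac:(pose proof (pow2_pos L); lia)).
      unfold r in *. lia.
Qed.

Lemma haar_cylinder_in_hole_le L v n : (v < 2^L)%nat ->
  (forall j, (j + 2 <= L)%nat -> ((v + n) mod 2^(j+2) <> j)%nat) ->
  haar (fun z => res L z = v /\ in_hole (add z n)) <= (/2)^(((v + n) mod 2^L) + 1).
Proof.
  intros Hv Hj.
  rewrite (haar_ext _ (fun z => exists j, res L z = v /\ res (j+2) (add z n) = j)).
  2:{ intros z; unfold in_hole; split; [intros [H1 [j H2]]; eauto | intros [j [H1 H2]]; eauto]. }
  apply haar_union_le.
  - intros j. apply hmble_and; [apply hmble_cylinder | apply hmble_hole_add].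
  - intros N. eapply Rle_trans; [|apply (tail_geometric_sum_le _ N)]. apply sum_Rle. intros j _.
    apply haar_cylinder_hole_le; auto.
Qed.

Lemma sum_indicator_le K c N : 0 <= c ->
  sum_f_R0 (fun n => if Nat.ltb n K then c else 0) N <= INR K * c.
Proof.
  intros Hc.
  assert (H : sum_f_R0 (fun n => if Nat.ltb n K then c else 0) N = INR (Nat.min (S N) K) * c).
  { induction N.
    - simpl. destruct K; simpl; [ring|]. destruct (Nat.min 0 K); simpl; ring.
    - rewrite tech5, IHN. destruct (Nat.ltb_spec (S N) K).
      + rewrite !Nat.min_l by lia. rewrite (S_INR (S N)). ring.
      + rewrite !Nat.min_r by lia. ring. }
  rewrite H. apply Rmult_le_compat_r; auto. apply le_INR. lia.
Qed.

Lemma INR_mul_half_pow_le a b c : (a * 2^b <= 2^c)%nat -> INR a * (/2)^c <= (/2)^b.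
Proof.
  intros H. apply le_INR in H. rewrite mult_INR, !pow_INR in H. simpl (INR 2) in H.
  rewrite !pow_inv. pose proof (pow_lt 2 b ltac:(lra)). pose proof (pow_lt 2 c ltac:(lra)).
  apply (Rmult_le_reg_r (2^b * 2^c)); [apply Rmult_lt_0_compat; auto|].
  replace (INR a * / 2 ^ c * (2 ^ b * 2 ^ c)) with (INR a * 2^b) by (field; lra).
  replace (/ 2 ^ b * (2 ^ b * 2 ^ c)) with (2^c) by (field; lra). auto.
Qed.

(* By [high_level] each of the at most [L] new holes has measure at most [2^-(2^(L-1)+1)]. *)
Lemma haar_new_holes_le y K L : (K <= L)%nat -> (L >= 6)%nat -> high_level y K L ->
  haar (fun z => res L z = res L y /\
    exists n, (n < K)%nat /\ ~ in_hole (add y n) /\ in_hole (add z n)) <= (/2)^(L+2).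
Proof.
  intros HLK HL6 Hhigh.
  set (v := res L y). set (c := (/2)^(2^(L-1) + 1)).
  set (Sn := fun n z => ((n < K)%nat /\ ~ in_hole (add y n)) /\ (res L z = v /\ in_hole (add z n))).
  rewrite (haar_ext _ (fun z => exists n, Sn n z)).
  2:{ intros z. unfold Sn. split; [intros [H1 [n [H2 [H3 H4]]]]; eauto
                                  | intros [n [[H2 H3] [H1 H4]]]; eauto 6]. }
  apply Rle_trans with (INR K * c).
  - apply haar_union_le.
    + intros n. apply hmble_const_and, hmble_and; [apply hmble_cylinder | apply hmble_in_hole_add].
    + intros N. eapply Rle_trans; [|apply (sum_indicator_le K c N); left; apply half_pow_pos].
      apply sum_Rle. intros n _. unfold Sn.
      destruct (classic ((n < K)%nat /\ ~ in_hole (add y n))) as [[Hn HO]|Hno].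
      * rewrite (proj2 (Nat.ltb_lt n K) Hn).
        rewrite (haar_ext _ (fun z => res L z = v /\ in_hole (add z n))) by (intros; tauto).
        destruct (Hhigh n Hn HO) as [Hr1 Hr2].
        eapply Rle_trans; [apply haar_cylinder_in_hole_le; [apply res_lt|]|].
        -- intros j Hj Heq. apply HO. exists j.
           rewrite res_add, (res_mod (j+2) L y Hj), Nat.Div0.add_mod_idemp_l. auto.
        -- rewrite Nat.mod_small by auto. apply half_pow_le. unfold v. lia.
      * unfold haar. rewrite lmeas_empty by (intros t [_ [H _]]; auto).
        destruct (Nat.ltb n K); [left; apply half_pow_pos | lra].
  - unfold c. apply INR_mul_half_pow_le.
    pose proof (pow2_gt L). pose proof (pow2_big L HL6).
    apply Nat.le_trans with (2^L * 2^(L+2))%nat; [apply Nat.mul_le_mono_r; lia|].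
    rewrite <- Nat.pow_add_r. apply Nat.pow_le_mono_r; lia.
Qed.

Lemma hole_depth_bound y K : exists L1, forall n, (n < K)%nat -> in_hole (add y n) ->
  exists j, (j + 2 <= L1)%nat /\ res (j+2) (add y n) = j.
Proof.
  induction K; [exists 0%nat; intros; lia|].
  destruct IHK as [L1 HL1]. destruct (classic (in_hole (add y K))) as [[j Hj]|Hn].
  - exists (Nat.max L1 (j+2)). intros n Hn HO. destruct (Nat.eq_dec n K) as [->|].
    + exists j. split; auto; lia.
    + destruct (HL1 n ltac:(lia) HO) as [j' [Hj1 Hj2]]. exists j'. split; auto; lia.
  - exists L1. intros n Hn2 HO. destruct (Nat.eq_dec n K) as [->|]; [tauto|]. apply HL1; auto; lia.
Qed.

(* The exceptional set [B] fills at most a quarter of the cylinder. *)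
Definition almost_contains_cylinder (U : X -> Prop) (L : nat) (y : Z2) : Prop :=
  exists B, hmble B /\ haar (fun z => res L z = res L y /\ B z) <= (/2)^(L+2) /\
    forall z, res L z = res L y -> ~ B z -> U (graph_pt z).

(* Near a graph point the exceptional set consists of the [z] acquiring a new hole
   among the first [K] shifts. *)
Lemma open_almost_contains_cylinder U : opene X dX U -> forall L0,
  exists L y, (L >= L0)%nat /\ (L >= 6)%nat /\ U (graph_pt y) /\ almost_contains_cylinder U L y.
Proof.
  intros [HU [x0 Hx0]] L0.
  destruct (open_agree U x0 HU Hx0) as [K HK].
  destruct (proj2_sig x0 K) as [y Hy].
  destruct (hole_depth_bound y K) as [L1 HL1].
  destruct (exists_high_level y K (Nat.max L0 L1)) as [L [HL [HLK [HL6 Hhigh]]]].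
  assert (Hgraph : forall z, res L z = res L y ->
    ~ (exists n, (n < K)%nat /\ ~ in_hole (add y n) /\ in_hole (add z n)) -> U (graph_pt z)).
  { intros z Hz HB. apply HK. eapply agree_trans; [exact Hy|].
    apply agree_sym, (graph_agree_of_res y z K L); auto.
    - intros n Hn Hdepth. destruct (HL1 n Hn Hdepth) as [j [Hj1 Hj2]]. exists j. split; auto; lia.
    - intros n Hn HOz. apply NNPP. intros HO. apply HB. eauto. }
  exists L, y. do 2 (split; [lia|]). split; [apply Hgraph; auto; intros [n [_ [H1 H2]]]; auto|].
  exists (fun z => exists n, (n < K)%nat /\ ~ in_hole (add y n) /\ in_hole (add z n)).
  split; [|split; [apply haar_new_holes_le; auto|]].
  - eapply hmble_ext;
      [|apply (hmble_union (fun n z => ((n < K)%nat /\ ~ in_hole (add y n)) /\ in_hole (add z n)))].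
    + intros z. split; [intros [n [[H1 H2] H3]]; eauto | intros [n [H1 [H2 H3]]]; eauto].
    + intros n. apply hmble_const_and, hmble_in_hole_add.
  - exact Hgraph.
Qed.

Lemma quarter_half_pow L : (/2)^(L+2) = /4 * (/2)^L.
Proof. rewrite pow_add. simpl. field. Qed.

Lemma haar_cylinder_avoiding_pos L v S1 S2 : (v < 2^L)%nat -> hmble S1 -> hmble S2 ->
  haar (fun z => res L z = v /\ S1 z) <= (/2)^(L+2) ->
  haar (fun z => res L z = v /\ S2 z) <= (/2)^(L+2) ->
  0 < haar (fun z => res L z = v /\ ~ S1 z /\ ~ S2 z).
Proof.
  intros Hv H1 H2 Hm1 Hm2.
  set (C := fun z => res L z = v).
  assert (HCi : forall S, hmble S -> hmble (fun z => C z /\ S z))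
    by (intros; apply hmble_and; [apply hmble_cylinder | auto]).
  assert (Hgood : hmble (fun z => C z /\ ~ S1 z /\ ~ S2 z))
    by (apply HCi, hmble_and; apply hmble_compl; auto).
  assert (Hbad : hmble (fun z => (C z /\ S1 z) \/ (C z /\ S2 z))) by (apply hmble_or; auto).
  assert (Hcov : haar C <= haar (fun z => C z /\ ~ S1 z /\ ~ S2 z) +
                 (haar (fun z => C z /\ S1 z) + haar (fun z => C z /\ S2 z))).
  { eapply Rle_trans; [apply (haar_mono C (fun z => (C z /\ ~ S1 z /\ ~ S2 z) \/
        ((C z /\ S1 z) \/ (C z /\ S2 z))))|].
    - apply hmble_cylinder.
    - apply hmble_or; auto.
    - intros z Hz. destruct (classic (S1 z)); [tauto|]. destruct (classic (S2 z)); tauto.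
    - eapply Rle_trans; [apply haar_or_le; auto|].
      pose proof (haar_or_le _ _ (HCi S1 H1) (HCi S2 H2)). lra. }
  unfold C in Hcov. rewrite haar_cylinder in Hcov by auto. rewrite quarter_half_pow in *.
  pose proof (half_pow_pos L). lra.
Qed.

Lemma cylinder_split L z a : (a < 2^L)%nat ->
  res L z = a <-> res (S L) z = a \/ res (S L) z = (a + 2^L)%nat.
Proof.
  intros Ha. rewrite res_S. pose proof (res_lt L z). pose proof (pow2_pos L).
  destruct (z L); cbn [Nat.b2n]; lia.
Qed.

(* Halving a cylinder, one of the two halves still meets the exceptional set in at most
   a quarter of its measure. *)
Lemma almost_contains_cylinder_succ U L y : almost_contains_cylinder U L y ->
  exists y', res L y' = res L y /\ almost_contains_cylinder U (S L) y'.
Proof.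
  intros [B [HB [Hm Hcont]]].
  set (a := res L y) in Hm |- *. pose proof (res_lt L y) as Ha. fold a in Ha.
  assert (Hhalf : forall y', res (S L) y' = a \/ res (S L) y' = (a + 2^L)%nat ->
    res L y' = a /\ forall z, res (S L) z = res (S L) y' -> res L z = a).
  { intros y' Hy'. split; [apply cylinder_split; auto|].
    intros z Hz. apply cylinder_split; auto. rewrite Hz. auto. }
  assert (Hsplit : haar (fun z => res L z = a /\ B z) =
    haar (fun z => res (S L) z = a /\ B z) + haar (fun z => res (S L) z = (a + 2^L)%nat /\ B z)).
  { rewrite <- haar_or; try (apply hmble_and; [apply hmble_cylinder | auto]).
    - apply haar_ext. intros z. rewrite (cylinder_split L z a Ha). tauto.
    - intros z [H1 _] [H2 _]. rewrite H1 in H2. pose proof (pow2_pos L). lia. }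
  assert (Hq : (/2)^(L+2) = 2 * (/2)^(S L + 2))
    by (replace (S L + 2)%nat with (S (L + 2)) by lia; simpl; field).
  assert (Hgood : forall v, (v < 2^(S L))%nat -> (v = a \/ v = a + 2^L)%nat ->
    haar (fun z => res (S L) z = v /\ B z) <= (/2)^(S L + 2) ->
    exists y', res L y' = res L y /\ almost_contains_cylinder U (S L) y').
  { intros v Hv Hva Hmv. exists (of_nat v).
    assert (Hres : res (S L) (of_nat v) = v) by (apply res_of_nat_small; auto).
    destruct (Hhalf (of_nat v) ltac:(rewrite Hres; lia)) as [H1 H2].
    split; auto. exists B. rewrite Hres. split; auto. split; auto.
    intros z Hz HBz. apply Hcont; auto. apply H2. congruence. }
  rewrite Nat.pow_succ_r' in Hgood.
  destruct (Rle_lt_dec (haar (fun z => res (S L) z = a /\ B z)) ((/2)^(S L + 2))).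
  - apply (Hgood a); auto; lia.
  - apply (Hgood (a + 2^L)%nat); [lia | right; auto | lra].
Qed.

Lemma almost_contains_cylinder_refine U L y d : almost_contains_cylinder U L y ->
  exists y', res L y' = res L y /\ almost_contains_cylinder U (L + d) y'.
Proof.
  intros H. induction d as [|d [y' [Hy' H']]]; [exists y; rewrite Nat.add_0_r; auto|].
  destruct (almost_contains_cylinder_succ U (L + d) y' H') as [y'' [Hy'' H'']].
  exists y''. replace (L + S d)%nat with (S (L + d)) by lia. split; auto.
  rewrite (res_mod L (L + d)), Hy'', <- (res_mod L (L + d)) by lia. auto.
Qed.

(** * Transitivity and sensitivity *)

Lemma haar_cylinder_add L v n S : hmble S ->
  haar (fun z => res L z = v /\ S (add z n)) <= haar (fun z => res L z = ((v + n) mod 2^L)%nat /\ S z).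
Proof.
  intros HS.
  destruct (haar_add (fun z => res L z = ((v + n) mod 2^L)%nat /\ S z) n
              (hmble_and _ _ (hmble_cylinder _ _) HS)) as [Hm Heq].
  rewrite <- Heq. apply haar_mono; [apply hmble_and; [apply hmble_cylinder | apply (haar_add S n HS)]
    | exact Hm |].
  intros z [Hz HSz]. split; auto. rewrite res_add, Hz. auto.
Qed.

Lemma res_add_to L a b : (res L (add a ((res L b + 2^L - res L a))%nat) = res L b)%nat.
Proof.
  rewrite res_add. pose proof (res_lt L a). pose proof (res_lt L b).
  replace (res L a + (res L b + 2 ^ L - res L a))%nat with (res L b + 1 * 2^L)%nat by lia.
  rewrite Nat.Div0.mod_add. apply Nat.mod_small, res_lt.
Qed.

(* Refine the cylinder found in [U] to the level of the one found in [V] and translate it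
   onto the latter; the two exceptional sets cannot fill the refined cylinder. *)
Lemma X_transitive : transitive_sys X dX TX.
Proof.
  intros U V HU HV.
  destruct (open_almost_contains_cylinder U HU 0) as [L1 [y1 [_ [_ [_ HU1]]]]].
  destruct (open_almost_contains_cylinder V HV L1) as [L2 [y2 [HL [_ [_ [B2 [HB2 [Hm2 HV2]]]]]]]].
  destruct (almost_contains_cylinder_refine U L1 y1 (L2 - L1) HU1) as [y [_ [B1 [HB1 [Hm1 HU2]]]]].
  replace (L1 + (L2 - L1))%nat with L2 in * by lia.
  set (n := (res L2 y2 + 2^L2 - res L2 y)%nat).
  assert (Hn : ((res L2 y + n) mod 2^L2 = res L2 y2)%nat) by (rewrite <- res_add; apply res_add_to).
  assert (Hm2' : haar (fun z => res L2 z = res L2 y /\ B2 (add z n)) <= (/2)^(L2+2))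
    by (eapply Rle_trans; [apply haar_cylinder_add; auto | rewrite Hn; auto]).
  destruct (haar_pos_inhabited _ (haar_cylinder_avoiding_pos L2 (res L2 y) B1
              (fun z => B2 (add z n)) (res_lt _ _) HB1 (proj1 (haar_add B2 n HB2)) Hm1 Hm2'))
    as [z [Hz [HB1z HB2z]]].
  exists n, (graph_pt z). split; [apply HU2; auto|].
  rewrite iter_graph_pt. apply HV2; auto. rewrite res_add, Hz. auto.
Qed.

Lemma res_minus_one_mod a b : (b <= a)%nat -> ((2^a - 1) mod 2^b = 2^b - 1)%nat.
Proof. intros H. rewrite <- !res_ones. symmetry. apply res_mod; auto. Qed.

(* The hole around [j = 2^L (N0 + 1) - 1] is reached from [y] at some [N >= j]. *)
Lemma exists_shift_into_hole y L N0 : exists N, (N >= N0)%nat /\ in_hole (add y N) /\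
  res L (add y N) = (2^L - 1)%nat.
Proof.
  set (j := (2^L * (N0 + 1) - 1)%nat).
  pose proof (pow2_pos L). pose proof (pow2_gt L).
  assert (Hj : (j = 2^L * N0 + (2^L - 1))%nat) by (unfold j; nia).
  set (N := (j + 2^(j+2) - res (j+2) y)%nat).
  pose proof (res_lt (j+2) y).
  assert (HyN : res (j+2) (add y N) = j).
  { rewrite res_add. unfold N.
    replace (res (j + 2) y + (j + 2 ^ (j + 2) - res (j + 2) y))%nat with (j + 1 * 2^(j+2))%nat by lia.
    rewrite Nat.Div0.mod_add. apply Nat.mod_small. pose proof (pow2_gt (j+2)). lia. }
  exists N. split; [unfold N; nia|]. split; [exists j; auto|].
  rewrite (res_mod L (j+2)), HyN, Hj by lia.
  rewrite Nat.mul_comm, Nat.add_comm, Nat.Div0.mod_add. apply Nat.mod_small. lia.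
Qed.

Lemma haar_cylinder_top_hole_le L y N : (L >= 6)%nat -> res L (add y N) = (2^L - 1)%nat ->
  haar (fun z => res L z = res L y /\ in_hole (add z N)) <= (/2)^(L+2).
Proof.
  intros HL6 HrN. pose proof (pow2_pos L).
  eapply Rle_trans; [apply haar_cylinder_in_hole_le; [apply res_lt|]|].
  - intros j' Hj' Heq.
    assert (E : res (j'+2) (add y N) = j')
      by (rewrite res_add, (res_mod (j'+2) L y Hj'), Nat.Div0.add_mod_idemp_l; auto).
    rewrite (res_mod (j'+2) L _ Hj'), HrN, res_minus_one_mod in E by auto.
    pose proof (pow2_gt (j'+2)). lia.
  - rewrite <- res_add, HrN. apply half_pow_le. replace (2^L - 1 + 1)%nat with (2^L)%nat by lia.
    pose proof (pow2_big L HL6). rewrite (pow2_pred L) by lia. lia.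
Qed.

(* Inside the cylinder of [y] most [z] avoid the hole [y + N] falls into. *)
Lemma X_sensitive : sensitive X dX TX.
Proof.
  exists (/2). split; [lra|]. intros U HU N0.
  destruct (open_almost_contains_cylinder U HU 0) as [L [y [_ [HL6 [HUy [B [HB [Hm HU1]]]]]]]].
  destruct (exists_shift_into_hole y L N0) as [N [HN [HyN HrN]]].
  destruct (haar_pos_inhabited _ (haar_cylinder_avoiding_pos L (res L y) B
              (fun z => in_hole (add z N)) (res_lt _ _) HB (hmble_in_hole_add N) Hm
              (haar_cylinder_top_hole_le L y N HL6 HrN)))
    as [z [Hz [HBz HNz]]].
  exists N. split; [lia|].
  exists (graph_pt z), (graph_pt y). split; [apply HU1; auto|]. split; [auto|].
  rewrite !iter_graph_pt. unfold dX. rewrite dpt_differ0; [lra|].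
  unfold differ. cbn [proj1_sig graph_pt fst snd]. intros [_ E].
  rewrite (proj2 (code_true _ _)), (proj2 (code_false _ _)) in E;
    [discriminate | exact HyN | exact HNz].
Qed.

(** * The invariant measure *)

Lemma hmble_forall_lt K (P : nat -> Z2 -> Prop) : (forall i, hmble (P i)) ->
  hmble (fun z => forall i, (i < K)%nat -> P i z).
Proof.
  intros H. induction K.
  - eapply hmble_ext; [|apply hmble_True]. intros z; split; auto; intros; lia.
  - eapply hmble_ext; [|apply (hmble_and _ _ IHK (H K))]. intros z. split.
    + intros [H1 H2] i Hi. destruct (Nat.eq_dec i K) as [->|]; [auto | apply H1; lia].
    + intros H1; split; [intros i Hi; apply H1; lia | apply H1; lia].
Qed.

Lemma hmble_code i b : hmble (fun z => code z i = b).
Proof.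
  destruct b.
  - eapply hmble_ext; [|apply (hmble_compl _ (hmble_in_hole_add i))]. intros z. rewrite code_true. tauto.
  - eapply hmble_ext; [|apply (hmble_in_hole_add i)]. intros z. rewrite code_false. tauto.
Qed.

Lemma hmble_res_code K v : hmble (fun z => res K (code z) = v).
Proof.
  eapply hmble_ext; [|apply (hmble_const_and (v < 2^K)%nat _
    (hmble_forall_lt K (fun i z => code z i = Nat.testbit v i) (fun i => hmble_code i _)))].
  intros z. rewrite res_spec. tauto.
Qed.

(* An open set is the union of the cylinders of [X] it contains. *)
Lemma hmble_borel A : borel X dX A -> hmble (fun z => A (graph_pt z)).
Proof.
  intros HA. induction HA as [U HU|A HA IH|A HA IH]; [|apply hmble_compl; auto | apply hmble_union; auto].
  eapply hmble_ext; [|apply (hmble_union (fun K z => exists v1 v2,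
    (forall x : X, res K (fst (proj1_sig x)) = v1 /\ res K (snd (proj1_sig x)) = v2 -> U x) /\
    (res K z = v1 /\ res K (code z) = v2)))].
  - intros z. split.
    + intros [K [v1 [v2 [H1 H2]]]]. apply H1. simpl. auto.
    + intros HUz. destruct (open_agree U (graph_pt z) HU HUz) as [K HK].
      exists K, (res K z), (res K (code z)). split; auto.
      intros x [H1 H2]. apply HK. intros i Hi. simpl. split; apply (res_inj K); auto.
  - intros K. apply hmble_union. intros v1. apply hmble_union. intros v2.
    apply hmble_const_and, hmble_and; [apply hmble_cylinder | apply hmble_res_code].
Qed.

Definition muX (A : X -> Prop) : R := haar (fun z => A (graph_pt z)).

Lemma X_borel_prob_measure : borel_prob_measure X dX muX.
Proof.
  split; [|split].
  - intros; apply haar_ge0.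
  - apply haar_True.
  - intros A HA Hd. unfold muX, haar.
    rewrite (lmeas_ext _ (fun t => exists n, haar_set (fun z => A n (graph_pt z)) t)).
    + apply lmeas_sigma.
      * intros n. apply hmble_borel; auto.
      * intros n t Ht. apply (haar_set_range _ _ Ht).
      * intros m n t Hmn [_ H1] [_ H2]. apply (Hd m n _ Hmn H1 H2).
    + intros t. unfold haar_set. split; [intros [H1 [n H2]]; eauto | intros [n [H1 H2]]; eauto].
Qed.

Lemma X_invariant : T_invariant X dX TX muX.
Proof.
  intros A HA. unfold muX.
  rewrite (haar_ext _ (fun z => A (graph_pt (succ z)))) by (intros z; rewrite TX_graph_pt; tauto).
  apply (proj2 (haar_succ (fun z => A (graph_pt z)) (hmble_borel A HA))).
Qed.

Lemma X_full_support : full_support X dX muX.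
Proof.
  intros U HU. unfold muX.
  destruct (open_almost_contains_cylinder U HU 0) as [L [y [_ [_ [_ [B [HB [Hm HU1]]]]]]]].
  eapply Rlt_le_trans; [apply (haar_cylinder_avoiding_pos L (res L y) B (fun _ => False));
    auto; [apply res_lt | apply hmble_False |]|].
  - unfold haar. rewrite lmeas_empty by (intros t [_ [_ []]]). left; apply half_pow_pos.
  - apply haar_mono.
    + apply hmble_and; [apply hmble_cylinder|]. apply hmble_and; apply hmble_compl; auto.
      apply hmble_False.
    + apply hmble_borel, borel_open, HU.
    + intros z [Hz [HBz _]]. apply HU1; auto.
Qed.

Lemma X_E_system : E_system X dX TX.
Proof.
  split; [apply X_transitive|].
  exists muX. split; [apply X_borel_prob_measure|]. split; [apply X_invariant | apply X_full_support].
Qed.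

End IntervalMeasure.

Module LebesgueMeasure.
Import all_boot all_order all_algebra all_classical all_reals all_analysis Rstruct.
Import Order.TTheory GRing.Theory Num.Theory.
Local Open Scope classical_set_scope.
Local Open Scope ring_scope.

Definition mble (D : R -> Prop) : Prop := @measurable _ (measurableTypeR R) D.
(* [fine] sends infinite measures to [0]; only subsets of [[0,1)] are measured below. *)
Definition meas (D : R -> Prop) : R := fine (@lebesgue_measure R D).

Lemma Ico_set (a b : R) : (fun x : R => Rle a x /\ Rlt x b) = [set` `[a, b[%R].
Proof.
  apply/funext => x /=. apply/propext. rewrite in_itv /=. split.
  - move=> [H1 H2]. by apply/andP; split; [apply/RleP | apply/RltP].
  - move/andP => [H1 H2]. by split; [apply/RleP | apply/RltP].
Qed.

Lemma mble_Ico a b : mble (fun x => Rle a x /\ Rlt x b).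
Proof. rewrite /mble Ico_set. exact: measurable_itv. Qed.

Lemma mble_compl D : mble D -> mble (fun x => ~ D x).
Proof. exact: measurableC. Qed.

Lemma bigcup_exists (D : nat -> set R) : (fun x => exists n, D n x) = \bigcup_n D n.
Proof. apply/funext => x. apply/propext. split=> [[n Hn]|[n _ Hn]]; by exists n. Qed.

Lemma mble_union (D : nat -> R -> Prop) : (forall n, mble (D n)) -> mble (fun x => exists n, D n x).
Proof. move=> HD. rewrite bigcup_exists. exact: bigcupT_measurable. Qed.

Lemma mble_translate D c : mble D -> mble (fun x => D (Rplus x c)).
Proof.
  move=> mD. have mf : measurable_fun (T := measurableTypeR R) (U := measurableTypeR R) setT (fun x : R => x + c).
    by apply: measurable_realfun.measurable_funD => //; exact: measurable_cst.
  by have := mf measurableT D mD; rewrite setTI.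
Qed.

Lemma meas_Ico a b : Rle a b -> meas (fun x => Rle a x /\ Rlt x b) = Rminus b a.
Proof.
  move=> Hab. rewrite /meas Ico_set lebesgue_measure_itv /=.
  case: ifPn => H /=; first by [].
  have -> : b = a.
  { move/RleP: Hab => Hab. apply/eqP. rewrite eq_le Hab andbT. by rewrite lte_fin -leNgt in H. }
  by rewrite /Rminus Rplus_opp_r.
Qed.

Lemma meas_ge0 D : Rle 0 (meas D).
Proof. apply/RleP. rewrite /meas. apply: fine_ge0. exact: measure_ge0. Qed.

Section Translate.
Variable c : R.
Local Open Scope ereal_scope.

Definition translated_measure (A : set (measurableTypeR R)) : \bar R :=
  lebesgue_measure ((fun x : R => Rplus x c) @^-1` A).

Let translated_measure0 : translated_measure set0 = 0.
Proof. by rewrite /translated_measure preimage_set0 measure0. Qed.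

Let translated_measure_ge0 A : 0 <= translated_measure A.
Proof. exact: measure_ge0. Qed.

Let translated_measure_sigma_additive : semi_sigma_additive translated_measure.
Proof.
  move=> F mF tF mUF; rewrite /translated_measure preimage_bigcup.
  apply: measure_semi_sigma_additive.
  - move=> n. exact: (@mble_translate (F n) c (mF n)).
  - apply/trivIsetP => /= i j _ _ ij; rewrite -preimage_setI.
    by move/trivIsetP : tF => /(_ _ _ _ _ ij) ->//; rewrite preimage_set0.
  - rewrite -preimage_bigcup. exact: (@mble_translate (\bigcup_n F n) c mUF).
Qed.

HB.instance Definition _ := isMeasure.Build _ _ _ translated_measure
  translated_measure0 translated_measure_ge0 translated_measure_sigma_additive.
End Translate.

(* Translation invariance, from the uniqueness of a measure giving intervals their length. *)
Lemma meas_translate D c : mble D -> meas (fun x => D (Rplus x c)) = meas D.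
Proof.
  move=> mD. rewrite /meas.
  suff -> : @lebesgue_measure R D = translated_measure c D by [].
  apply: lebesgue_measure_unique => //.
  move=> X [[a b] _ <-] /=. rewrite /translated_measure.
  have -> : (fun x : R => Rplus x c) @^-1` [set` `]a, b]%R] = [set` `](a - c), (b - c)]%R].
  { apply/funext => x /=. apply/propext. rewrite !in_itv /=. by rewrite ltrBlDr lerBrDr. }
  rewrite !lebesgue_measure_itv /= !lte_fin ltrD2r.
  case: ifPn => // _. congr (_%:E). by rewrite opprB addrA subrK.
Qed.

Lemma lebesgue_measure_unit_fin_num (A : set (measurableTypeR R)) : measurable A ->
  (forall x, A x -> Rle 0 x /\ Rlt x 1) -> (@lebesgue_measure R A \is a fin_num)%E.
Proof.
  move=> mA HA. rewrite ge0_fin_numE; last exact: measure_ge0.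
  apply: (@le_lt_trans _ _ (@lebesgue_measure R [set` `[0%R, 1%R[%R])).
  - apply: le_measure; rewrite ?inE; [exact: mA | exact: measurable_itv | ].
    move=> x /HA [h1 h2] /=. rewrite in_itv /=. apply/andP; split; [exact/RleP | exact/RltP].
  - by rewrite lebesgue_measure_itv /= lte_fin ltr01 ltry.
Qed.

Lemma meas_sigma (D : nat -> R -> Prop) : (forall n, mble (D n)) ->
  (forall n x, D n x -> Rle 0 x /\ Rlt x 1) -> (forall m n x, m <> n -> D m x -> D n x -> False) ->
  infinite_sum (fun n => meas (D n)) (meas (fun x => exists n, D n x)).
Proof.
  move=> mD HD Hdisj.
  have tD : trivIset setT (D : nat -> set (measurableTypeR R)).
  { move=> i j _ _ [x [H1 H2]]. apply: contrapT => Hij. exact: (Hdisj i j x Hij H1 H2). }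
  have H := @measure_sigma_additive _ _ _ (@lebesgue_measure R) D mD tD.
  have finD n : (@lebesgue_measure R (D n) \is a fin_num)%E
    by apply: lebesgue_measure_unit_fin_num; [exact: mD | exact: HD].
  have finU : (@lebesgue_measure R (\bigcup_n (D n : set (measurableTypeR R))) \is a fin_num)%E.
  { apply: lebesgue_measure_unit_fin_num; first exact: bigcupT_measurable.
    move=> x [n _ Hn]. exact: (HD n). }
  rewrite /meas bigcup_exists.
  have H' : ((fun n => \sum_(0 <= i < n) @lebesgue_measure R (D i))%E @ \oo -->
     (fine (@lebesgue_measure R (\bigcup_n (D n : set (measurableTypeR R)))))%:E)%classic
    by rewrite fineK.
  have [_ {}H] := (fine_cvgP _ _).1 H'.
  have Hs N : fine (\sum_(0 <= i < N.+1) @lebesgue_measure R (D i))%E =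
              sum_f_R0 (fun n => fine (@lebesgue_measure R (D n))) N.
  { elim: N => [|N IH]; first by rewrite big_nat1.
    rewrite big_nat_recr //= fineD; first by rewrite IH.
    - rewrite ?inE sum_fin_num. apply/allP => x /mapP [i _ ->]. exact: finD.
    - rewrite ?inE. exact: finD. }
  move=> eps /RltP Heps.
  move/cvgrPdist_lt: H => /(_ eps Heps) [N _ HN].
  exists N => n /ssrnat.leP Hn.
  have := HN n.+1 (leqW Hn). rewrite /= Hs.
  rewrite /R_dist => /RltP. by rewrite Rabs_minus_sym.
Qed.

Definition lebesgue_unit_interval : interval_measure :=
  IntervalMeasure meas mble mble_Ico mble_compl mble_union mble_translate
    meas_Ico meas_ge0 meas_sigma meas_translate.

End LebesgueMeasure.

Theorem mainTheorem6 :
  exists (X : Type) (d : X -> X -> R) (T : X -> X),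
    TDS X d T /\
    E_system X d T /\ ~ minimal_sys X d T /\
    sensitive X d T /\ ~ thickly_sensitive X d T /\
    (forall x, Eq_syn X d T x) /\
    (forall x, Tran X d T x -> Eq_syn X d T x) /\
    (exists x, Eq_syn X d T x /\ ~ Tran X d T x).
Proof.
  exists X, dX, TX.
  split; [apply X_TDS|].
  split; [apply (X_E_system LebesgueMeasure.lebesgue_unit_interval)|].
  split; [apply X_not_minimal|].
  split; [apply (X_sensitive LebesgueMeasure.lebesgue_unit_interval)|].
  split; [apply (Eq_syn_not_thickly_sensitive _ _ _ (graph_pt (fun _ => false)) (X_Eq_syn _))|].
  split; [apply X_Eq_syn|].
  split; [intros; apply X_Eq_syn|].
  exists (graph_pt (fun _ => false)). split; [apply X_Eq_syn | apply X_not_Tran].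
Qed.
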